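(* Let $M=\langle W,W^\bot,\preceq,R,V\rangle$ be a $\mathsf{CK}$-model, $w\in W$, and $\varphi$ a well-named $\mu$-sentence. Then (1) $\mathsf I$ has a winning strategy for $\mathcal G(M,w\models\varphi)$ if and only if $M,w\models\varphi$; and (2) $\mathsf{II}$ has a winning strategy for $\mathcal G(M,w\models\varphi)$ if and only if $M,w\not\models\varphi$.
   Context: Syntax. Fix disjoint sets $\mathrm{Prop}$ (propositions) and $\mathrm{Var}$ (propositional variables). $\mu$-formulas are given by $\varphi::=P\mid X\mid\bot\mid\varphi\land\varphi\mid\varphi\lor\varphi\mid\varphi\to\varphi\mid\Box\varphi\mid\Diamond\varphi\mid\mu X.\varphi\mid\nu X.\varphi$ with $P\in\mathrm{Prop}$, $X\in\mathrm{Var}$, where $\mu X.\varphi$ and $\nu X.\varphi$ may only be formed when $X$ is positive in $\varphi$. Positivity/negativity is defined inductively: $X$ is both positive and negative in $P$, in $\bot$, and in any variable $Y\neq X$; $X$ is positive in $X$; if $X$ is positive (resp. negative) in $\varphi$ and $\psi$, then it is positive (resp. negative) in $\varphi\land\psi$, $\varphi\lor\psi$, $\Box\varphi$, $\Diamond\varphi$; if $X$ is negative (resp. positive) in $\varphi$ and positive (resp. negative) in $\psi$, then $X$ is positive (resp. negative) in $\varphi\to\psi$; $X$ is both positive and negative in $\mu X.\varphi$ and $\nu X.\varphi$. $\eta$ ranges over $\{\mu,\nu\}$. A sentence has no free variables. $\mathrm{Sub}(\varphi)$ is the set of subformulas. $\varphi$ is guarded if for every subformula $\eta X.\psi$, every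 occurrence of $X$ in $\psi$ is in the scope of $\Box$ or $\Diamond$; well-bounded if each variable occurring bound in $\varphi$ is bound by exactly one fixed-point operator $\eta X$ in $\varphi$; well-named if guarded and well-bounded. For well-named $\varphi$ and a subformula $\eta X.\psi$, write $\psi_X:=\psi$. Models. A $\mathsf{CK}$-model is $M=\langle W,W^\bot,\preceq,R,V\rangle$ with $W\neq\emptyset$, $W^\bot\subseteq W$ (fallible worlds), $\preceq$ a reflexive transitive relation on $W$, $R$ a binary relation on $W$, and $V:\mathrm{Prop}\to\mathcal P(W)$, such that: $w\preceq v$ and $w\in V(P)$ imply $v\in V(P)$; $W^\bot\subseteq V(P)$ for all $P$; and $W^\bot$ is closed under $\preceq$ and $R$. $M[X\mapsto A]$ denotes $M$ with $V(X):=A$. Semantics. $w\preceq;R\,u$ means there is $v$ with $w\preceq v$ and $vRu$. $\|P\|=V(P)$; $\|\bot\|=W^\bot$; $\|\varphi\land\psi\|=\|\varphi\|\cap\|\psi\|$; $\|\varphi\lor\psi\|=\|\varphi\|\cup\|\psi\|$; $\|\varphi\to\psi\|=\{w\mid\forall v\,(w\preceq v\wedge v\in\|\varphi\|\Rightarrow v\in\|\psi\|)\}$; $\|\Box\varphi\|=\{w\mid\forall u\,(w\preceq;R\,u\Rightarrow u\in\|\varphi\|)\}$; $\|\Diamond\varphi\|=\{w\mid\forall v\,(w\preceq v\Rightarrow\exists u\,(vRu\wedge u\in\|\varphi\|))\}$; $\|\mu X.\varphi\|$, $\|\nu X.\varphi\|$ are the least and greatest fixed points of $A\mapsto\|\varphi\|^{M[X\mapsto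 A]}$. $M,w\models\varphi$ means $w\in\|\varphi\|^M$. Evaluation game $\mathcal G(M,w\models\varphi)$. Two players $\mathsf I,\mathsf{II}$ hold the two roles Verifier ($\mathsf V$) and Refuter ($\mathsf R$), always different; $\bar{\mathsf Q}$ is the role dual to $\mathsf Q$. Positions are $\langle v,\psi,\mathsf Q\rangle$ with $v\in W$, $\psi\in\mathrm{Sub}(\varphi)$, plus auxiliary positions $\langle v,\hat\Diamond\psi,\mathsf Q\rangle$ for $\Diamond\psi\in\mathrm{Sub}(\varphi)$ and $\langle v,\psi?\theta,\mathsf Q\rangle$ for $\psi\to\theta\in\mathrm{Sub}(\varphi)$; $\mathsf Q$ is the current role of $\mathsf I$ ($\mathsf{II}$ has $\bar{\mathsf Q}$). Initial position $\langle w,\varphi,\mathsf V\rangle$. Each position is owned by the player holding the indicated role, who picks the next position from the listed set: Owned by the Verifier role: $\langle v,P,\mathsf Q\rangle$ with $v\notin V(P)$: no moves; $\langle v,\bot,\mathsf Q\rangle$ with $v\notin W^\bot$: no moves; $\langle v,\psi\lor\theta,\mathsf Q\rangle\to\{\langle v,\psi,\mathsf Q\rangle,\langle v,\theta,\mathsf Q\rangle\}$; $\langle v,\psi?\theta,\mathsf Q\rangle\to\{\langle v,\psi,\bar{\mathsf Q}\rangle,\langle v,\theta,\mathsf Q\rangle\}$; $\langle v,\hat\Diamond\psi,\mathsf Q\rangle\to\{\langle u,\psi,\mathsf Q\rangle\mid vRu\}$; $\langle v,\mu X.\psi_X,\mathsf Q\rangle\to\{\langle v,\psi_X,\mathsf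 Q\rangle\}$; $\langle v,X,\mathsf Q\rangle\to\{\langle v,\mu X.\psi_X,\mathsf Q\rangle\}$ when $X$ is bound by $\mu$. Owned by the Refuter role: $\langle v,P,\mathsf Q\rangle$ with $v\in V(P)$: no moves; $\langle v,\bot,\mathsf Q\rangle$ with $v\in W^\bot$: no moves; $\langle v,\psi\land\theta,\mathsf Q\rangle\to\{\langle v,\psi,\mathsf Q\rangle,\langle v,\theta,\mathsf Q\rangle\}$; $\langle v,\psi\to\theta,\mathsf Q\rangle\to\{\langle u,\psi?\theta,\mathsf Q\rangle\mid v\preceq u\}$; $\langle v,\Box\psi,\mathsf Q\rangle\to\{\langle u,\psi,\mathsf Q\rangle\mid v\preceq;R\,u\}$; $\langle v,\Diamond\psi,\mathsf Q\rangle\to\{\langle u,\hat\Diamond\psi,\mathsf Q\rangle\mid v\preceq u\}$; $\langle v,\nu X.\psi_X,\mathsf Q\rangle\to\{\langle v,\psi_X,\mathsf Q\rangle\}$; $\langle v,X,\mathsf Q\rangle\to\{\langle v,\nu X.\psi_X,\mathsf Q\rangle\}$ when $X$ is bound by $\nu$. A run is a maximal (finite or infinite) sequence of positions starting at the initial position, each obtained by a legal move. The move from $\langle v,X,\mathsf Q\rangle$ to $\langle v,\eta X.\psi_X,\mathsf Q\rangle$ regenerates $\eta X.\psi_X$. A fixed-point subformula $\eta X.\psi_X$ is owned by $\mathsf I$ if some position $\langle v,\eta X.\psi_X,\mathsf Q\rangle$ is reachable and either ($\mathsf Q=\mathsf V$ and $\eta=\nu$) or ($\mathsf Q=\mathsf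 R$ and $\eta=\mu$); otherwise it is owned by $\mathsf{II}$. Winning: in a finite run, the owner of the last position (who has no move) loses. In an infinite run, let $\eta X.\psi_X$ be the outermost fixed-point formula regenerated infinitely often (every other infinitely often regenerated fixed-point formula is a subformula of it); $\mathsf I$ wins iff $\mathsf I$ owns $\eta X.\psi_X$, otherwise $\mathsf{II}$ wins. A (positional) strategy for a player maps each position owned by that player having at least one move to one of its legal moves; it is winning if the player wins every run in which they follow it. *)

From Stdlib Require Import List.
Set Implicit Arguments.

Section Syntax.
Variables (Pr Vr : Type).

Inductive form : Type :=
| FP (p : Pr)
| FV (x : Vr)
| FBot
| FAnd (a b : form)
| FOr (a b : form)
| FImp (a b : form)
| FBox (a : form)
| FDia (a : form)
| FMu (x : Vr) (a : form)
| FNu (x : Vr) (a : form).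

Inductive posv (X : Vr) : form -> Prop :=
| pos_P p : posv X (FP p)
| pos_Bot : posv X FBot
| pos_Vo Y : Y <> X -> posv X (FV Y)
| pos_VX : posv X (FV X)
| pos_And a b : posv X a -> posv X b -> posv X (FAnd a b)
| pos_Or a b : posv X a -> posv X b -> posv X (FOr a b)
| pos_Imp a b : negv X a -> posv X b -> posv X (FImp a b)
| pos_Box a : posv X a -> posv X (FBox a)
| pos_Dia a : posv X a -> posv X (FDia a)
| pos_MuX a : posv X (FMu X a)
| pos_NuX a : posv X (FNu X a)
| pos_Muo Y a : Y <> X -> posv X a -> posv X (FMu Y a)
| pos_Nuo Y a : Y <> X -> posv X a -> posv X (FNu Y a)
with negv (X : Vr) : form -> Prop :=
| neg_P p : negv X (FP p)
| neg_Bot : negv X FBot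
| neg_Vo Y : Y <> X -> negv X (FV Y)
| neg_And a b : negv X a -> negv X b -> negv X (FAnd a b)
| neg_Or a b : negv X a -> negv X b -> negv X (FOr a b)
| neg_Imp a b : posv X a -> negv X b -> negv X (FImp a b)
| neg_Box a : negv X a -> negv X (FBox a)
| neg_Dia a : negv X a -> negv X (FDia a)
| neg_MuX a : negv X (FMu X a)
| neg_NuX a : negv X (FNu X a)
| neg_Muo Y a : Y <> X -> negv X a -> negv X (FMu Y a)
| neg_Nuo Y a : Y <> X -> negv X a -> negv X (FNu Y a).

Inductive Sub (c : form) : form -> Prop :=
| Sub_refl : Sub c c
| Sub_AndL a b : Sub c a -> Sub c (FAnd a b)
| Sub_AndR a b : Sub c b -> Sub c (FAnd a b)
| Sub_OrL a b : Sub c a -> Sub c (FOr a b)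
| Sub_OrR a b : Sub c b -> Sub c (FOr a b)
| Sub_ImpL a b : Sub c a -> Sub c (FImp a b)
| Sub_ImpR a b : Sub c b -> Sub c (FImp a b)
| Sub_Box a : Sub c a -> Sub c (FBox a)
| Sub_Dia a : Sub c a -> Sub c (FDia a)
| Sub_Mu x a : Sub c a -> Sub c (FMu x a)
| Sub_Nu x a : Sub c a -> Sub c (FNu x a).

Definition mu_formula (f : form) : Prop :=
  forall X a, (Sub (FMu X a) f -> posv X a) /\ (Sub (FNu X a) f -> posv X a).

Inductive freeIn (X : Vr) : form -> Prop :=
| free_V : freeIn X (FV X)
| free_AndL a b : freeIn X a -> freeIn X (FAnd a b)
| free_AndR a b : freeIn X b -> freeIn X (FAnd a b)
| free_OrL a b : freeIn X a -> freeIn X (FOr a b)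
| free_OrR a b : freeIn X b -> freeIn X (FOr a b)
| free_ImpL a b : freeIn X a -> freeIn X (FImp a b)
| free_ImpR a b : freeIn X b -> freeIn X (FImp a b)
| free_Box a : freeIn X a -> freeIn X (FBox a)
| free_Dia a : freeIn X a -> freeIn X (FDia a)
| free_Mu Y a : Y <> X -> freeIn X a -> freeIn X (FMu Y a)
| free_Nu Y a : Y <> X -> freeIn X a -> freeIn X (FNu Y a).

Definition sentence (f : form) : Prop := forall X, ~ freeIn X f.

Inductive unguardedOcc (X : Vr) : form -> Prop :=
| ug_V : unguardedOcc X (FV X)
| ug_AndL a b : unguardedOcc X a -> unguardedOcc X (FAnd a b)
| ug_AndR a b : unguardedOcc X b -> unguardedOcc X (FAnd a b)
| ug_OrL a b : unguardedOcc X a -> unguardedOcc X (FOr a b)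
| ug_OrR a b : unguardedOcc X b -> unguardedOcc X (FOr a b)
| ug_ImpL a b : unguardedOcc X a -> unguardedOcc X (FImp a b)
| ug_ImpR a b : unguardedOcc X b -> unguardedOcc X (FImp a b)
| ug_Mu Y a : unguardedOcc X a -> unguardedOcc X (FMu Y a)
| ug_Nu Y a : unguardedOcc X a -> unguardedOcc X (FNu Y a).

Definition guarded (f : form) : Prop :=
  forall X a, (Sub (FMu X a) f \/ Sub (FNu X a) f) -> ~ unguardedOcc X a.

Fixpoint binders (f : form) : list Vr :=
  match f with
  | FP _ | FV _ | FBot => nil
  | FAnd a b | FOr a b | FImp a b => binders a ++ binders b
  | FBox a | FDia a => binders a
  | FMu x a | FNu x a => x :: binders a
  end.

Definition well_bounded (f : form) : Prop := NoDup (binders f).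

Definition well_named (f : form) : Prop := guarded f /\ well_bounded f.

End Syntax.

Arguments FP {Pr Vr}.
Arguments FV {Pr Vr}.
Arguments FBot {Pr Vr}.
Arguments FAnd {Pr Vr}.
Arguments FOr {Pr Vr}.
Arguments FImp {Pr Vr}.
Arguments FBox {Pr Vr}.
Arguments FDia {Pr Vr}.
Arguments FMu {Pr Vr}.
Arguments FNu {Pr Vr}.

Record CKmodel (Pr : Type) := {
  W : Type;
  Wbot : W -> Prop;
  le : W -> W -> Prop;
  R : W -> W -> Prop;
  V : Pr -> W -> Prop;
  W_nonempty : inhabited W;
  le_refl : forall w, le w w;
  le_trans : forall u v w, le u v -> le v w -> le u w;
  V_mono : forall P w v, le w v -> V P w -> V P v;
  V_bot : forall P w, Wbot w -> V P w;
  Wbot_le : forall w v, le w v -> Wbot w -> Wbot v;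
  Wbot_R : forall w v, R w v -> Wbot w -> Wbot v
}.

Arguments W {Pr}.
Arguments Wbot {Pr}.
Arguments le {Pr}.
Arguments R {Pr}.
Arguments V {Pr}.

Section Semantics.
Variables (Pr Vr : Type) (M : CKmodel Pr).

Definition env := Vr -> W M -> Prop.

Definition upd (rho : env) (X : Vr) (A : W M -> Prop) : env :=
  fun Y w => (Y = X /\ A w) \/ (Y <> X /\ rho Y w).

(* least fixed point = intersection of prefixed points,
   greatest fixed point = union of postfixed points (Knaster-Tarski) *)
Fixpoint sem (rho : env) (f : form Pr Vr) {struct f} : W M -> Prop :=
  match f with
  | FP p => V M p
  | FV x => rho x
  | FBot => Wbot M
  | FAnd a b => fun w => sem rho a w /\ sem rho b w
  | FOr a b => fun w => sem rho a w \/ sem rho b w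
  | FImp a b => fun w => forall v, le M w v -> sem rho a v -> sem rho b v
  | FBox a => fun w => forall v u, le M w v -> R M v u -> sem rho a u
  | FDia a => fun w => forall v, le M w v -> exists u, R M v u /\ sem rho a u
  | FMu x a => fun w => forall A : W M -> Prop,
                 (forall v, sem (upd rho x A) a v -> A v) -> A w
  | FNu x a => fun w => exists A : W M -> Prop,
                 (forall v, A v -> sem (upd rho x A) a v) /\ A w
  end.

(* M, w |= f  (for sentences the variable valuation is irrelevant) *)
Definition sat (w : W M) (f : form Pr Vr) : Prop :=
  sem (fun _ _ => False) f w.

End Semantics.

Inductive role := Ver | Ref.
Definition dual (q : role) : role := match q with Ver => Ref | Ref => Ver end.
Inductive player := PI | PII.

Section Game.
Variables (Pr Vr : Type) (M : CKmodel Pr) (phi : form Pr Vr) (w0 : W M).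

(* formula part of a position: psi, hat-Diamond psi, or psi ? theta *)
Inductive node :=
| NF (a : form Pr Vr)
| NDia (a : form Pr Vr)
| NImp (a b : form Pr Vr).

(* position <v, node, Q>, Q the current role of player I *)
Inductive position := Pos (v : W M) (n : node) (q : role).

Definition pos_ok (p : position) : Prop :=
  match p with
  | Pos _ (NF a) _ => Sub a phi
  | Pos _ (NDia a) _ => Sub (FDia a) phi
  | Pos _ (NImp a b) _ => Sub (FImp a b) phi
  end.

Definition init : position := Pos w0 (NF phi) Ver.

Inductive move : position -> position -> Prop :=
| mv_OrL v a b q : move (Pos v (NF (FOr a b)) q) (Pos v (NF a) q)
| mv_OrR v a b q : move (Pos v (NF (FOr a b)) q) (Pos v (NF b) q)
| mv_QL v a b q : move (Pos v (NImp a b) q) (Pos v (NF a) (dual q))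
| mv_QR v a b q : move (Pos v (NImp a b) q) (Pos v (NF b) q)
| mv_HDia v u a q : R M v u -> move (Pos v (NDia a) q) (Pos u (NF a) q)
| mv_Mu v x a q : move (Pos v (NF (FMu x a)) q) (Pos v (NF a) q)
| mv_VMu v x a q : Sub (FMu x a) phi ->
    move (Pos v (NF (FV x)) q) (Pos v (NF (FMu x a)) q)
| mv_AndL v a b q : move (Pos v (NF (FAnd a b)) q) (Pos v (NF a) q)
| mv_AndR v a b q : move (Pos v (NF (FAnd a b)) q) (Pos v (NF b) q)
| mv_Imp v u a b q : le M v u -> move (Pos v (NF (FImp a b)) q) (Pos u (NImp a b) q)
| mv_Box v v' u a q : le M v v' -> R M v' u ->
    move (Pos v (NF (FBox a)) q) (Pos u (NF a) q)
| mv_Dia v u a q : le M v u -> move (Pos v (NF (FDia a)) q) (Pos u (NDia a) q)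
| mv_Nu v x a q : move (Pos v (NF (FNu x a)) q) (Pos v (NF a) q)
| mv_VNu v x a q : Sub (FNu x a) phi ->
    move (Pos v (NF (FV x)) q) (Pos v (NF (FNu x a)) q).

Definition verOwned (p : position) : Prop :=
  match p with
  | Pos v n _ =>
    match n with
    | NF (FP P) => ~ V M P v
    | NF FBot => ~ Wbot M v
    | NF (FOr _ _) => True
    | NImp _ _ => True
    | NDia _ => True
    | NF (FMu _ _) => True
    | NF (FV x) => ~ exists a, Sub (FNu x a) phi
    | _ => False
    end
  end.

Definition roleOf (p : position) : role := match p with Pos _ _ q => q end.

Definition ownsPos (p : position) (pl : player) : Prop :=
  match pl with
  | PI => (verOwned p /\ roleOf p = Ver) \/ (~ verOwned p /\ roleOf p = Ref)
  | PII => (verOwned p /\ roleOf p = Ref) \/ (~ verOwned p /\ roleOf p = Ver)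
  end.

Inductive reachable : position -> Prop :=
| reach_init : reachable init
| reach_step p p' : reachable p -> move p p' -> reachable p'.

Definition fixOwnedByI (c : form Pr Vr) : Prop :=
  exists v q, reachable (Pos v (NF c) q) /\
    ((q = Ver /\ exists x a, c = FNu x a) \/ (q = Ref /\ exists x a, c = FMu x a)).

Definition fixOwner (c : form Pr Vr) (pl : player) : Prop :=
  match pl with PI => fixOwnedByI c | PII => ~ fixOwnedByI c end.

Definition finite_run (f : nat -> position) (n : nat) : Prop :=
  f 0 = init /\ (forall i, i < n -> move (f i) (f (S i))) /\
  (forall p, ~ move (f n) p).

Definition infinite_run (f : nat -> position) : Prop :=
  f 0 = init /\ forall i, move (f i) (f (S i)).

Definition regen (f : nat -> position) (i : nat) (c : form Pr Vr) : Prop :=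
  exists v q x, f i = Pos v (NF (FV x)) q /\ f (S i) = Pos v (NF c) q /\
    ((exists a, c = FMu x a) \/ (exists a, c = FNu x a)).

Definition infRegen (f : nat -> position) (c : form Pr Vr) : Prop :=
  forall n, exists i, n <= i /\ regen f i c.

Definition outermostRegen (f : nat -> position) (c : form Pr Vr) : Prop :=
  infRegen f c /\ forall c', infRegen f c' -> Sub c' c.

Definition wins_finite (pl : player) (f : nat -> position) (n : nat) : Prop :=
  ~ ownsPos (f n) pl.

Definition wins_infinite (pl : player) (f : nat -> position) : Prop :=
  exists c, outermostRegen f c /\ fixOwner c pl.

Definition strategy_for (pl : player) (sigma : position -> position) : Prop :=
  forall p, pos_ok p -> ownsPos p pl -> (exists p', move p p') -> move p (sigma p).

Definition winning_strategy (pl : player) (sigma : position -> position) : Prop :=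
  strategy_for pl sigma /\
  (forall f n, finite_run f n ->
     (forall i, i < n -> ownsPos (f i) pl -> f (S i) = sigma (f i)) ->
     wins_finite pl f n) /\
  (forall f, infinite_run f ->
     (forall i, ownsPos (f i) pl -> f (S i) = sigma (f i)) ->
     wins_infinite pl f).

Definition has_winning_strategy (pl : player) : Prop :=
  exists sigma, winning_strategy pl sigma.

End Game.

(* Player [pl] wins with a signature strategy. Call a binder ranked for [pl]
   when [pl] is the player who must not regenerate it forever: a [mu] that
   [pl] verifies or a [nu] that [pl] refutes. A consistent valuation
   interprets unranked binder variables by their true fixed points and ranked
   ones by a stage of the transfinite approximation of the fixed point
   (approximating the complement for a [nu]). Stages are the members of the
   tower generated by the unfolding operator under steps and unions; towers
   are well-ordered by inclusion, so they replace ordinals. At every position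
   [pl] keeps its claim true under the least consistent valuation making it
   true, ordered lexicographically along the binders from the outermost in.
   Following a ranked variable back to its binder can be paid for by dropping
   to an earlier stage while keeping the outer binders fixed; hence the
   outermost binder regenerated infinitely often is unranked, and a finite
   play stops at a position [pl] does not own. Since the two players cannot
   both win, each player wins exactly when the sentence has the truth value
   that player defends. *)
From Stdlib Require Import List Classical ClassicalEpsilon FunctionalExtensionality
  PropExtensionality Lia Arith.
Import ListNotations.
Set Implicit Arguments.

Lemma set_ext (X : Type) (A B : X -> Prop) : (forall x, A x <-> B x) -> A = B.
Proof.
  intro H; apply functional_extensionality; intro x; apply propositional_extensionality; auto.
Qed.

Definition set_incl (X : Type) (A B : X -> Prop) := forall x, A x -> B x.

Lemma set_incl_antisym (X : Type) (A B : X -> Prop) : set_incl A B -> set_incl B A -> A = B.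
Proof. intros; apply set_ext; split; auto. Qed.

Section Tower.
Variable X : Type.
Variable F : (X -> Prop) -> (X -> Prop).
Hypothesis F_mono : forall A B, set_incl A B -> set_incl (F A) (F B).

Inductive tower : (X -> Prop) -> Prop :=
| tower_step A : tower A -> tower (F A)
| tower_union (S : (X -> Prop) -> Prop) :
    (forall A, S A -> tower A) -> tower (fun x => exists A, S A /\ A x).

Lemma tower_below (P : X -> Prop) : set_incl (F P) P -> forall A, tower A -> set_incl A P.
Proof.
  intros HP A HA; induction HA as [A HA IH | S HS IH].
  - intros x Hx. apply HP. exact (F_mono IH Hx).
  - intros x [A [HA Hx]]. exact (IH A HA x Hx).
Qed.

Lemma tower_infl A : tower A -> set_incl A (F A).
Proof.
  intro HA; induction HA as [A HA IH | S HS IH].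
  - apply F_mono; exact IH.
  - intros x [A [HA Hx]]. apply (F_mono (A := A)).
    + intros y Hy; exists A; auto.
    + apply IH; auto.
Qed.

Lemma tower_empty : tower (fun _ => False).
Proof.
  replace (fun _ : X => False) with (fun x => exists A : X -> Prop, False /\ A x).
  - apply tower_union; intros A [].
  - apply set_ext; intros x; split; [intros [A [[] _]] | intros []].
Qed.

(* The classical proof that a tower is a chain: every member is "extreme",
   i.e. every smaller member is strictly below it by at least one step. *)
Let extreme A := forall B, tower B -> set_incl B A -> B = A \/ set_incl (F B) A.
Let extreme_compare A : tower A -> extreme A ->
  forall B, tower B -> set_incl B A \/ set_incl (F A) B.
Proof.
  intros HA Hex B HB; induction HB as [B HB IH | S HS IH].
  - destruct IH as [H|H].
    + destruct (Hex B HB H) as [E|E].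
      * subst; right; intros x Hx; exact Hx.
      * left; exact E.
    + right. intros x Hx. apply tower_infl; auto.
  - destruct (classic (forall C, S C -> set_incl C A)) as [H|H].
    + left; intros x [C [HC Hx]]; exact (H C HC x Hx).
    + right. apply not_all_ex_not in H as [C H].
      apply imply_to_and in H as [HC H].
      destruct (IH C HC) as [H'|H']; [contradiction|].
      intros x Hx; exists C; split; auto.
Qed.

Let tower_extreme A : tower A -> extreme A.
Proof.
  intro HA; induction HA as [A HA IH | S HS IH].
  - intros B HB HBA.
    destruct (extreme_compare HA IH HB) as [H|H].
    + destruct (IH B HB H) as [E|E].
      * subst; right; intros x Hx; exact Hx.
      * right. intros x Hx. apply tower_infl; auto.
    + left; apply set_incl_antisym; auto.
  - intros B HB HBU.
    destruct (classic (exists C, S C /\ set_incl B C /\ B <> C)) as [[C [HC [H1 H2]]]|H].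
    + destruct (IH C HC B HB H1) as [E|E]; [contradiction|].
      right; intros x Hx; exists C; auto.
    + left. apply set_incl_antisym; auto.
      intros x [C [HC Hx]].
      destruct (extreme_compare (HS C HC) (IH C HC) HB) as [H1|H1].
      * assert (B = C) as E.
        { apply NNPP; intro H2; apply H; exists C; auto. }
        subst; auto.
      * apply H1. apply tower_infl; auto.
Qed.

Lemma tower_total A B : tower A -> tower B -> set_incl A B \/ set_incl B A.
Proof.
  intros HA HB.
  destruct (extreme_compare HA (tower_extreme HA) HB) as [H|H]; auto.
  left; intros x Hx; apply H; apply tower_infl; auto.
Qed.

Lemma tower_union_all (S : (X -> Prop) -> Prop) :
  tower (fun x => exists A, (tower A /\ S A) /\ A x).
Proof. apply tower_union; intros A [HA _]; exact HA. Qed.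

Lemma tower_wf (S : (X -> Prop) -> Prop) :
  (forall A, S A -> tower A) -> (exists A, S A) ->
  exists m, S m /\ forall A, S A -> set_incl m A.
Proof.
  intros HS [A0 HA0].
  set (U := fun x => exists T, (tower T /\ forall s, S s -> set_incl T s) /\ T x).
  assert (HU : tower U) by apply tower_union_all.
  assert (HUs : forall s, S s -> set_incl U s).
  { intros s Hs x [T [[_ HT] Hx]]; exact (HT s Hs x Hx). }
  destruct (classic (exists s, S s /\ set_incl s U)) as [[s [Hs Hs']]|H].
  - exists s; split; auto. intros A HA x Hx; apply (HUs A HA); auto.
  - exfalso.
    assert (HF : forall s, S s -> set_incl (F U) s).
    { intros s Hs. destruct (tower_extreme (HS s Hs) HU (HUs s Hs)) as [E|E]; auto.
      exfalso; apply H; exists s; split; auto; rewrite <- E; intros x Hx; auto. }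
    assert (HFU : set_incl (F U) U).
    { intros x Hx; exists (F U); split; auto. split; auto. apply tower_step; auto. }
    apply H; exists A0; split; auto.
    apply tower_below; auto.
Qed.

Lemma tower_entry T v : tower T -> T v ->
  exists U, tower U /\ set_incl U T /\ ~ U v /\ F U v.
Proof.
  intros HT Hv.
  set (U := fun x => exists A, (tower A /\ ~ A v) /\ A x).
  assert (HU : tower U) by apply tower_union_all.
  assert (HnU : ~ U v) by (intros [A [[_ HA] Hx]]; auto).
  exists U; repeat split; auto.
  - intros x [A [[HA HAv] Hx]].
    destruct (tower_total HA HT) as [H|H]; auto.
    exfalso; apply HAv, H, Hv.
  - apply NNPP; intro HFv.
    assert (HFU : set_incl (F U) U).
    { intros x Hx; exists (F U); split; auto. split; auto. apply tower_step; auto. }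
    apply HnU. exact (tower_below HFU HT v Hv).
Qed.

Definition lfp_mem v := forall P, set_incl (F P) P -> P v.

Lemma tower_lfp v : lfp_mem v -> exists U, tower U /\ F U v.
Proof.
  intros Hv.
  set (U := fun x => exists A, tower A /\ A x).
  assert (HU : tower U) by (apply tower_union; auto).
  exists U; split; auto.
  assert (HFU : set_incl (F U) U)
    by (intros x Hx; exists (F U); split; auto; apply tower_step; auto).
  apply tower_infl; auto. apply Hv; auto.
Qed.

End Tower.

Section Syntax.
Variables Pr Vr : Type.
Local Notation form := (form Pr Vr).

Fixpoint size (f : form) : nat :=
  match f with
  | FP _ | FV _ | FBot => 1
  | FAnd a b | FOr a b | FImp a b => S (size a + size b)
  | FBox a | FDia a | FMu _ a | FNu _ a => S (size a)
  end.

Lemma Sub_size (c f : form) : Sub c f -> size c <= size f.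
Proof. induction 1; simpl; lia. Qed.

Lemma Sub_trans (a b c : form) : Sub a b -> Sub b c -> Sub a c.
Proof.
  intros H1 H2; induction H2; [exact H1| ..];
  solve [constructor; auto | apply Sub_AndR; auto | apply Sub_OrR; auto | apply Sub_ImpR; auto].
Qed.

Lemma Sub_eq_size (a b : form) : Sub a b -> size b <= size a -> a = b.
Proof. induction 1; simpl; intros; auto; pose proof (Sub_size H); simpl in *; lia. Qed.

Lemma Sub_antisym (a b : form) : Sub a b -> Sub b a -> a = b.
Proof. intros H1 H2; apply Sub_eq_size; auto; apply Sub_size; auto. Qed.

Lemma Sub_inv (c f : form) : Sub c f -> c = f \/
  match f with
  | FAnd a b | FOr a b | FImp a b => Sub c a \/ Sub c b
  | FBox a | FDia a | FMu _ a | FNu _ a => Sub c a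
  | _ => False end.
Proof. inversion 1; subst; auto. Qed.

Definition binds (x : Vr) (c : form) := (exists a, c = FMu x a) \/ (exists a, c = FNu x a).

Lemma binds_var (x y : Vr) (c : form) : binds x c -> binds y c -> x = y.
Proof. intros [[a E]|[a E]] [[b E']|[b E']]; subst; inversion E'; auto. Qed.

Lemma binds_shape (x : Vr) (c : form) : binds x c -> exists a, c = FMu x a \/ c = FNu x a.
Proof. intros [[a E]|[a E]]; exists a; auto. Qed.

Lemma freeIn_binder_body (x z : Vr) (a c : form) :
  (c = FMu x a \/ c = FNu x a) -> freeIn z a -> z <> x -> freeIn z c.
Proof. intros [E|E] H1 H2; subst; constructor; auto. Qed.

Lemma binds_not_free (x z : Vr) (c : form) : binds x c -> freeIn z c -> z <> x.
Proof. intros [[a E]|[a E]] H; subst; inversion H; subst; congruence. Qed.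

Lemma binds_in_binders x c f : binds x c -> Sub c f -> In x (binders f).
Proof.
  intros Hb H; induction H; simpl; try (apply in_or_app; auto); auto.
  destruct Hb as [[a E]|[a E]]; subst; simpl; auto.
Qed.

Lemma In_binders_binds {x : Vr} {f : form} : In x (binders f) -> exists c, binds x c /\ Sub c f.
Proof.
  induction f; simpl; intros H; try contradiction;
  try (apply in_app_or in H; destruct H as [H|H];
       [destruct (IHf1 H) as [c [Hc Hs]] | destruct (IHf2 H) as [c [Hc Hs]]];
       exists c; split; auto; constructor; auto; fail);
  try (destruct (IHf H) as [c [Hc Hs]]; exists c; split; auto; constructor; auto; fail).
  - destruct H as [->|H].
    + exists (FMu x f); split; [left; eauto | constructor].
    + destruct (IHf H) as [c [Hc Hs]]; exists c; split; auto; constructor; auto.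
  - destruct H as [->|H].
    + exists (FNu x f); split; [right; eauto | constructor].
    + destruct (IHf H) as [c [Hc Hs]]; exists c; split; auto; constructor; auto.
Qed.

Lemma NoDup_app_disjoint (l1 l2 : list Vr) x : NoDup (l1 ++ l2) -> In x l1 -> In x l2 -> False.
Proof.
  induction l1; simpl; intros H H1 H2; auto.
  inversion H as [|? ? Hn Hnd]; subst. destruct H1; subst; eauto.
  apply Hn; apply in_or_app; auto.
Qed.

Lemma NoDup_split_notin (l r : list Vr) x : NoDup (l ++ x :: r) -> ~ In x l.
Proof. intros H Hx. eapply NoDup_app_disjoint; eauto. simpl; auto. Qed.

Lemma NoDup_split_unique (l1 l2 m1 m2 : list Vr) z : NoDup (l1 ++ z :: l2) ->
  l1 ++ z :: l2 = m1 ++ z :: m2 -> l1 = m1 /\ l2 = m2.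
Proof.
  revert m1; induction l1; intros m1 Hnd E; destruct m1; simpl in *; inversion E; subst.
  - auto.
  - exfalso; inversion Hnd; subst; apply H1; apply in_or_app; right; simpl; auto.
  - exfalso; inversion Hnd; subst; apply H1; apply in_or_app; right; simpl; auto.
  - inversion Hnd; subst. destruct (IHl1 m1 H3 H1); subst; auto.
Qed.

Lemma binds_unique x c c' f : NoDup (binders f) -> binds x c -> binds x c' ->
  Sub c f -> Sub c' f -> c = c'.
Proof.
  intros Hnd Hb Hb'. revert Hnd. induction f; intros Hnd H H'; simpl in Hnd;
  apply Sub_inv in H; apply Sub_inv in H'.
  1-3: destruct H as [H|[]]; subst; destruct Hb as [[? E]|[? E]]; discriminate.
  1-3: (destruct H as [H|H]; [subst; destruct Hb as [[? E]|[? E]]; discriminate|]);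
       (destruct H' as [H'|H']; [subst; destruct Hb' as [[? E]|[? E]]; discriminate|]);
       destruct H as [H|H]; destruct H' as [H'|H'];
    [ apply IHf1; eauto using NoDup_app_remove_r
    | exfalso; eapply NoDup_app_disjoint; eauto using binds_in_binders
    | exfalso; eapply NoDup_app_disjoint; eauto using binds_in_binders
    | apply IHf2; eauto using NoDup_app_remove_l ].
  1-2: (destruct H as [H|H]; [subst; destruct Hb as [[? E]|[? E]]; discriminate|]);
       (destruct H' as [H'|H']; [subst; destruct Hb' as [[? E]|[? E]]; discriminate|]);
       apply IHf; auto.
  1-2: inversion Hnd as [|? ? Hn Hnd']; subst;
       destruct H as [H|H]; destruct H' as [H'|H']; subst; auto;
       [ exfalso; destruct Hb as [[? E]|[? E]]; inversion E; subst;
         apply Hn; eapply binds_in_binders; eauto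
       | exfalso; destruct Hb' as [[? E]|[? E]]; inversion E; subst;
         apply Hn; eapply binds_in_binders; eauto ].
Qed.

Lemma binders_outer_first (y : Vr) (a : form) (z : Vr) (c f : form) :
  (c = FMu y a \/ c = FNu y a) -> Sub c f ->
  In z (binders a) -> exists l1 l2, binders f = l1 ++ z :: l2 /\ In y l1.
Proof.
  intros E H Hz; induction H; simpl.
  1: { destruct (in_split _ _ Hz) as [m1 [m2 Hm]].
    destruct E; subst; simpl; rewrite Hm; exists (y :: m1), m2; split; simpl; auto. }
  all: try (destruct IHSub as [l1 [l2 [Hl Hy]]]; auto).
  all: try (rewrite Hl; exists l1, (l2 ++ binders b); rewrite <- app_assoc; split; auto; fail).
  all: try (rewrite Hl; exists (binders a0 ++ l1), l2; rewrite app_assoc; split; auto;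
            apply in_or_app; auto; fail).
  all: try (exists l1, l2; split; auto; fail).
  all: try (rewrite Hl; exists (x :: l1), l2; split; simpl; auto; fail).
Qed.

Lemma freeIn_Sub x c f : Sub c f -> freeIn x c ->
  freeIn x f \/ exists d a : form, (d = FMu x a \/ d = FNu x a) /\ Sub d f /\ Sub c a.
Proof.
  induction 1; intros Hf; auto;
  try (destruct (IHSub Hf) as [H1|[c' [a' [E [H2 H3]]]]];
       [left; constructor; auto
       | right; exists c', a'; repeat split; auto; constructor; auto]; fail).
  - destruct (IHSub Hf) as [H1|[c' [a' [E [H2 H3]]]]].
    + destruct (classic (x0 = x)) as [->|Hne].
      * right; exists (FMu x a), a; repeat split; auto; constructor.
      * left; constructor; auto.
    + right; exists c', a'; repeat split; auto; constructor; auto.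
  - destruct (IHSub Hf) as [H1|[c' [a' [E [H2 H3]]]]].
    + destruct (classic (x0 = x)) as [->|Hne].
      * right; exists (FNu x a), a; repeat split; auto; constructor.
      * left; constructor; auto.
    + right; exists c', a'; repeat split; auto; constructor; auto.
Qed.

(* [occ f r c q]: [c] occurs in [f] where whoever holds role [r] at the root
   holds role [q]; roles swap to the left of an implication. *)
Inductive occ : form -> role -> form -> role -> Prop :=
| occ_refl f r : occ f r f r
| occ_AndL a b r c q : occ a r c q -> occ (FAnd a b) r c q
| occ_AndR a b r c q : occ b r c q -> occ (FAnd a b) r c q
| occ_OrL a b r c q : occ a r c q -> occ (FOr a b) r c q
| occ_OrR a b r c q : occ b r c q -> occ (FOr a b) r c q
| occ_ImpL a b r c q : occ a (dual r) c q -> occ (FImp a b) r c q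
| occ_ImpR a b r c q : occ b r c q -> occ (FImp a b) r c q
| occ_Box a r c q : occ a r c q -> occ (FBox a) r c q
| occ_Dia a r c q : occ a r c q -> occ (FDia a) r c q
| occ_Mu x a r c q : occ a r c q -> occ (FMu x a) r c q
| occ_Nu x a r c q : occ a r c q -> occ (FNu x a) r c q.

Lemma occ_Sub f r c q : occ f r c q -> Sub c f.
Proof.
  induction 1; solve [constructor; auto | apply Sub_AndR; auto | apply Sub_OrR; auto
                     | apply Sub_ImpR; auto].
Qed.

Lemma occ_trans f r c q d q' : occ f r c q -> occ c q d q' -> occ f r d q'.
Proof.
  induction 1; intros; auto;
  solve [constructor; auto | apply occ_AndR; auto | apply occ_OrR; auto | apply occ_ImpR; auto].
Qed.

Lemma dual_dual q : dual (dual q) = q.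
Proof. destruct q; reflexivity. Qed.

(* In a well-bounded formula a binder occurs once, hence with one role. *)
Lemma occ_binder_role x c f r q1 q2 : NoDup (binders f) -> binds x c ->
  occ f r c q1 -> occ f r c q2 -> q1 = q2.
Proof.
  intros Hnd Hb H1; revert q2 Hnd; induction H1; intros q2 Hnd H2; simpl in Hnd.
  1: { inversion H2; subst; auto; exfalso;
    match goal with H : occ _ _ _ _ |- _ => apply occ_Sub, Sub_size in H end; simpl in *; lia. }
  all: inversion H2; subst;
    try (exfalso; apply occ_Sub, Sub_size in H1; simpl in *; lia).
  all: try (eapply IHocc; eauto using NoDup_app_remove_r, NoDup_app_remove_l;
            inversion Hnd; auto; fail).
  all: exfalso; eapply NoDup_app_disjoint; eauto using binds_in_binders, occ_Sub.
Qed.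

Lemma mu_formula_Sub (c f : form) : Sub c f -> mu_formula f -> mu_formula c.
Proof.
  intros Hs Hmu X a; split; intros H;
    [apply (proj1 (Hmu X a)) | apply (proj2 (Hmu X a))]; eapply Sub_trans; eassumption.
Qed.

Local Ltac Sub_child :=
  first [ apply Sub_AndL; apply Sub_refl | apply Sub_AndR; apply Sub_refl
        | apply Sub_OrL; apply Sub_refl | apply Sub_OrR; apply Sub_refl
        | apply Sub_ImpL; apply Sub_refl | apply Sub_ImpR; apply Sub_refl
        | apply Sub_Box; apply Sub_refl | apply Sub_Dia; apply Sub_refl
        | apply Sub_Mu; apply Sub_refl | apply Sub_Nu; apply Sub_refl ].

(* Positivity makes every bound occurrence of a variable carry the role of
   its binder. *)
Lemma occ_var_free_or_bound (f : form) : mu_formula f -> forall r q x, occ f r (FV x) q ->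
  (freeIn x f /\ (posv x f -> q = r) /\ (negv x f -> q = dual r)) \/
  (exists c, binds x c /\ occ f r c q).
Proof.
  induction f; intros Hmu r q y Ho; inversion Ho; subst.
  1: { left; split; [constructor|split]; auto. intros Hn; inversion Hn; congruence. }
  all: match goal with
       | H : occ ?a _ (FV _) _, IH : mu_formula ?a -> _, Hmu : mu_formula ?g |- _ =>
           assert (Hma : mu_formula a) by (apply (mu_formula_Sub (f := g)); [Sub_child|exact Hmu]);
           destruct (IH Hma _ _ _ H) as [[H1 [H2 H3]]|[c [Hc Hc']]]
       end.
  all: try (right; exists c; split; auto;
            solve [constructor; auto | apply occ_AndR; auto | apply occ_OrR; auto
                  | apply occ_ImpR; auto]; fail).
  1-4: left; split;
       [solve [constructor; auto | apply free_AndR; auto | apply free_OrR; auto]|split];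
       intros Hp; inversion Hp; auto.
  1: { left; split; [constructor; auto|split]; intros Hp; inversion Hp; subst; auto.
    rewrite H3; auto; apply dual_dual. }
  1: { left; split; [apply free_ImpR; auto|split]; intros Hp; inversion Hp; auto. }
  1-2: left; split; [constructor; auto|split]; intros Hp; inversion Hp; auto.
  1: { destruct (classic (x = y)) as [->|Hne].
    + right; exists (FMu y f); split; [left; eauto|].
      rewrite H2; [constructor|]. apply (proj1 (Hmu y f)), Sub_refl.
    + left; split; [constructor; auto|split]; intros Hp; inversion Hp; subst; auto;
      congruence. }
  1: { destruct (classic (x = y)) as [->|Hne].
    + right; exists (FNu y f); split; [right; eauto|].
      rewrite H2; [constructor|]. apply (proj2 (Hmu y f)), Sub_refl.
    + left; split; [constructor; auto|split]; intros Hp; inversion Hp; subst; auto;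
      congruence. }
Qed.

End Syntax.

Section Semantics.
Variables (Pr Vr : Type) (M : CKmodel Pr).
Local Notation form := (form Pr Vr).
Local Notation env := (env Vr M).

Lemma upd_eq (rho : env) X A w : upd rho X A X w <-> A w.
Proof. unfold upd; split; [intros [[_ H]|[H _]]; auto; congruence | auto]. Qed.

Lemma upd_neq (rho : env) X A Y w : Y <> X -> (upd rho X A Y w <-> rho Y w).
Proof. unfold upd; intros Hne; split; [intros [[E _]|[_ H]]; auto; congruence | auto]. Qed.

Lemma upd_agree (rho rho' : env) X A Y :
  (Y <> X -> forall w, rho Y w <-> rho' Y w) ->
  forall w, upd rho X A Y w <-> upd rho' X A Y w.
Proof.
  intros H w. destruct (classic (Y = X)) as [->|Hne].
  - rewrite !upd_eq; tauto.
  - rewrite !upd_neq; auto.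
Qed.

Lemma sem_ext (a : form) : forall (rho rho' : env),
  (forall x, freeIn x a -> forall w, rho x w <-> rho' x w) ->
  forall w, sem rho a w <-> sem rho' a w.
Proof.
  induction a; intros rho rho' H w; simpl.
  - reflexivity.
  - apply H; constructor.
  - reflexivity.
  - rewrite (IHa1 rho rho'), (IHa2 rho rho'); [reflexivity| |]; intros; apply H;
      solve [constructor; auto | apply free_AndR; auto].
  - rewrite (IHa1 rho rho'), (IHa2 rho rho'); [reflexivity| |]; intros; apply H;
      solve [constructor; auto | apply free_OrR; auto].
  - assert (E1 : forall v, sem rho a1 v <-> sem rho' a1 v)
      by (apply IHa1; intros; apply H; constructor; auto).
    assert (E2 : forall v, sem rho a2 v <-> sem rho' a2 v)
      by (apply IHa2; intros; apply H; apply free_ImpR; auto).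
    split; intros Hi v Hv Ha; apply E2; apply Hi; auto; apply E1; auto.
  - assert (E1 : forall v, sem rho a v <-> sem rho' a v)
      by (apply IHa; intros; apply H; constructor; auto).
    split; intros Hi v u H1 H2; [rewrite <- E1|rewrite E1]; eauto.
  - assert (E1 : forall v, sem rho a v <-> sem rho' a v)
      by (apply IHa; intros; apply H; constructor; auto).
    split; intros Hi v H1; destruct (Hi v H1) as [u [Hu1 Hu2]]; exists u;
      [rewrite <- E1|rewrite E1]; auto.
  - assert (E : forall A v, sem (upd rho x A) a v <-> sem (upd rho' x A) a v).
    { intros A; apply IHa; intros y Hy; apply upd_agree; intros Hne; apply H; constructor; auto. }
    split; intros Hi A HA; apply Hi; intros v Hv; apply HA; [rewrite <- E|rewrite E]; auto.
  - assert (E : forall A v, sem (upd rho x A) a v <-> sem (upd rho' x A) a v).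
    { intros A; apply IHa; intros y Hy; apply upd_agree; intros Hne; apply H; constructor; auto. }
    split; intros [A [HA Hw]]; exists A; split; auto; intros v Hv;
      [rewrite <- E|rewrite E]; auto.
Qed.

Lemma sem_binder_ext (rho1 rho2 : env) y a :
  (forall z, z <> y -> forall w, rho1 z w <-> rho2 z w) ->
  (forall w, sem rho1 (FMu y a) w -> sem rho2 (FMu y a) w) /\
  (forall w, sem rho1 (FNu y a) w -> sem rho2 (FNu y a) w).
Proof.
  intros H; split; intros w; apply sem_ext; intros z Hz u;
    inversion Hz; subst; symmetry; apply H; congruence.
Qed.

Lemma sem_mono (x : Vr) (a : form) : forall (rho1 rho2 : env),
  (forall y, y <> x -> forall w, rho1 y w <-> rho2 y w) ->
  set_incl (rho1 x) (rho2 x) ->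
  (posv x a -> set_incl (sem rho1 a) (sem rho2 a)) /\
  (negv x a -> set_incl (sem rho2 a) (sem rho1 a)).
Proof.
  induction a; intros rho1 rho2 Hag Hinc; split; intros Hp; inversion Hp; subst.
  all: try (intros w; apply (sem_binder_ext _ _ a Hag); fail).
  all: try (intros w; apply (sem_binder_ext _ _ a (fun z Hz u => iff_sym (Hag z Hz u))); fail).
  all: intros w Hw; simpl in *; auto.
  all: try (apply Hag; auto; fail).
  1-6: specialize (IHa1 rho1 rho2 Hag Hinc); specialize (IHa2 rho1 rho2 Hag Hinc).
  7-10: specialize (IHa rho1 rho2 Hag Hinc).
  11-14: assert (Hupd : forall A, (forall y, y <> x -> forall w,
                upd rho1 x0 A y w <-> upd rho2 x0 A y w) /\
                set_incl (upd rho1 x0 A x) (upd rho2 x0 A x))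
         by (intros A; split;
             [ intros y Hy; apply upd_agree; intros _; apply Hag; auto
             | intros u; rewrite !upd_neq by congruence; apply Hinc ]).
  - split; [apply IHa1|apply IHa2]; auto; apply Hw.
  - split; [apply IHa1|apply IHa2]; auto; apply Hw.
  - destruct Hw; [left; apply IHa1|right; apply IHa2]; auto.
  - destruct Hw; [left; apply IHa1|right; apply IHa2]; auto.
  - intros v Hv Hh. apply IHa2; auto. apply Hw; auto. apply IHa1; auto.
  - intros v Hv Hh. apply IHa2; auto. apply Hw; auto. apply IHa1; auto.
  - intros v u Hh1 Hh2; apply IHa; eauto.
  - intros v u Hh1 Hh2; apply IHa; eauto.
  - intros v Hh; destruct (Hw v Hh) as [u [Hu1 Hu2]]; exists u; split; auto; apply IHa; auto.
  - intros v Hh; destruct (Hw v Hh) as [u [Hu1 Hu2]]; exists u; split; auto; apply IHa; auto.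
  - intros A HA; apply Hw; intros v Hv; apply HA.
    apply (proj1 (IHa _ _ (proj1 (Hupd A)) (proj2 (Hupd A)))); auto.
  - intros A HA; apply Hw; intros v Hv; apply HA.
    apply (proj2 (IHa _ _ (proj1 (Hupd A)) (proj2 (Hupd A)))); auto.
  - destruct Hw as [A [HA Hw]]; exists A; split; auto; intros v Hv.
    apply (proj1 (IHa _ _ (proj1 (Hupd A)) (proj2 (Hupd A)))); auto.
  - destruct Hw as [A [HA Hw]]; exists A; split; auto; intros v Hv.
    apply (proj2 (IHa _ _ (proj1 (Hupd A)) (proj2 (Hupd A)))); auto.
Qed.

Definition body_op (rho : env) (x : Vr) (a : form) : (W M -> Prop) -> (W M -> Prop) :=
  fun A => sem (upd rho x A) a.

Lemma body_op_mono rho x a : posv x a ->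
  forall A B, set_incl A B -> set_incl (body_op rho x a A) (body_op rho x a B).
Proof.
  intros Hp A B H. unfold body_op.
  refine (proj1 (sem_mono (x:=x) a (upd rho x A) (upd rho x B) _ _) Hp).
  - intros y Hy u; rewrite !upd_neq; tauto.
  - intros u; rewrite !upd_eq; auto.
Qed.

Lemma sem_Mu_unfold rho x a : posv x a -> forall w,
  sem rho (FMu x a) w <-> body_op rho x a (sem rho (FMu x a)) w.
Proof.
  intros Hp.
  assert (H1 : set_incl (body_op rho x a (sem rho (FMu x a))) (sem rho (FMu x a))).
  { intros w Hw P HP. apply HP. revert w Hw. apply body_op_mono; auto.
    intros v Hv; apply Hv; auto. }
  intros w; split; auto.
  intros Hw; apply Hw. intros v Hv. apply (body_op_mono rho Hp H1); auto.
Qed.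

Lemma sem_Nu_unfold rho x a : posv x a -> forall w,
  sem rho (FNu x a) w <-> body_op rho x a (sem rho (FNu x a)) w.
Proof.
  intros Hp.
  assert (H1 : set_incl (sem rho (FNu x a)) (body_op rho x a (sem rho (FNu x a)))).
  { intros w [A [HA Hw]].
    refine (body_op_mono rho Hp (A:=A) (B:=sem rho (FNu x a)) _ w (HA w Hw)).
    intros v Hv; exists A; auto. }
  intros w; split; auto.
  intros Hw; exists (body_op rho x a (sem rho (FNu x a))); split; auto.
  intros v Hv; apply (body_op_mono rho Hp H1); auto.
Qed.

End Semantics.

Lemma ex_max_bounded (P : nat -> Prop) B : (exists n, P n) -> (forall n, P n -> n <= B) ->
  exists m, P m /\ forall n, P n -> n <= m.
Proof.
  induction B; intros [n Hn] HB.
  - exists n; split; auto. intros k Hk; pose proof (HB k Hk); pose proof (HB n Hn); lia.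
  - destruct (classic (P (S B))) as [H|H].
    + exists (S B); split; auto.
    + apply IHB; eauto. intros k Hk. specialize (HB k Hk).
      destruct (Nat.eq_dec k (S B)); subst; [contradiction|lia].
Qed.

Section Main.
Variables (Pr Vr : Type) (M : CKmodel Pr) (phi : form Pr Vr).
Hypothesis Hmu : mu_formula phi.
Hypothesis Hnd : NoDup (binders phi).
Hypothesis Hsent : sentence phi.
Local Notation form := (form Pr Vr).
Local Notation env := (env Vr M).
Local Notation L := (binders phi).
Local Notation set := (W M -> Prop).

Lemma binds_posv x c : binds x c -> Sub c phi ->
  exists a, (c = FMu x a \/ c = FNu x a) /\ posv x a.
Proof.
  intros [[a E]|[a E]] Hs; subst; exists a; split; auto.
  - apply (proj1 (Hmu x a)); auto.
  - apply (proj2 (Hmu x a)); auto.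
Qed.

Lemma free_binder_before y c z l r : binds y c -> Sub c phi -> freeIn z c ->
  L = l ++ y :: r -> In z l.
Proof.
  intros Hb Hs Hf HL.
  destruct (freeIn_Sub Hs Hf) as [H|[c' [a' [E [H1 H2]]]]].
  - exfalso; apply (Hsent H).
  - assert (Hy : In y (binders a')) by (eapply binds_in_binders; eauto).
    destruct (binders_outer_first y E H1 Hy) as [l1 [l2 [HL' Hz]]].
    pose proof Hnd as Hnd'. rewrite HL in Hnd', HL'.
    destruct (NoDup_split_unique _ _ _ _ _ Hnd' HL'); subst; auto.
Qed.

Lemma occ_binder_of_var x c q : binds x c -> Sub c phi ->
  occ phi Ver (FV x) q -> occ phi Ver c q.
Proof.
  intros Hb Hs Ho.
  destruct (occ_var_free_or_bound Hmu Ho) as [[Hf _]|[c' [Hb' Ho']]].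
  - exfalso; apply (Hsent Hf).
  - rewrite (binds_unique Hnd Hb Hb' Hs (occ_Sub Ho')); auto.
Qed.

Lemma var_binder_scope y c c' : Sub (FV y) c -> Sub c phi -> binds y c' -> Sub c' phi ->
  Sub c' c \/ size c < size c'.
Proof.
  intros H1 H2 H3 H4.
  destruct (freeIn_Sub H1 (free_V Pr y)) as [Hf|[d [a [E [Hd _]]]]].
  - destruct (freeIn_Sub H2 Hf) as [Hf'|[d [a [E [Hd Hca]]]]].
    + exfalso; apply (Hsent Hf').
    + assert (Hbd : binds y d) by (destruct E; [left|right]; eauto).
      rewrite <- (binds_unique Hnd Hbd H3 Hd H4). right.
      apply Sub_size in Hca. destruct E; subst; simpl; lia.
  - left. assert (Hbd : binds y d) by (destruct E; [left|right]; eauto).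
    rewrite <- (binds_unique Hnd Hbd H3 (Sub_trans Hd H2) H4); auto.
Qed.

Lemma inner_binder_after c c' Y psi Z {l0 r l1 r1 : list Vr} : Sub c phi -> Sub c' c -> c' <> c ->
  (c = FMu Y psi \/ c = FNu Y psi) -> binds Z c' ->
  L = l1 ++ Z :: r1 -> L = l0 ++ Y :: r -> forall y, In y (l0 ++ [Y]) -> In y l1.
Proof.
  intros Hs Hs' Hne E Hb HL1 HL0 y Hy.
  assert (Hsub : Sub c' psi).
  { apply Sub_inv in Hs' as [H|H]; [contradiction|]. destruct E; subst; auto. }
  assert (HZ : In Z (binders psi)) by (eapply binds_in_binders; eauto).
  destruct (binders_outer_first Z E Hs HZ) as [m1 [m2 [HL HY]]].
  pose proof Hnd as Hnd1. rewrite HL1 in Hnd1. rewrite HL1 in HL.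
  destruct (NoDup_split_unique _ _ _ _ _ Hnd1 HL) as [<- _].
  destruct (in_split _ _ HY) as [a [b El1]].
  assert (HL2 : L = a ++ Y :: (b ++ Z :: r1)) by (rewrite HL1, El1, <- app_assoc; reflexivity).
  pose proof Hnd as Hnd2. rewrite HL0 in Hnd2. rewrite HL0 in HL2.
  destruct (NoDup_split_unique _ _ _ _ _ Hnd2 HL2) as [<- _].
  rewrite El1. apply in_app_or in Hy as [Hy|[<-|[]]]; apply in_or_app; simpl; auto.
Qed.

Section Plays.
Variable w0 : W M.

Definition occ_pos (p : position Vr M) : Prop :=
  match p with
  | Pos _ _ (NF a) q => occ phi Ver a q
  | Pos _ _ (NDia a) q => occ phi Ver (FDia a) q
  | Pos _ _ (NImp a b) q => occ phi Ver (FImp a b) q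
  end.

Lemma reachable_occ p : reachable phi w0 p -> occ_pos p.
Proof.
  induction 1 as [|p p' Hr IH Hm].
  - simpl. constructor.
  - inversion Hm; subst; simpl in *.
    all: try solve [apply (occ_trans IH); solve [repeat constructor | apply occ_AndR; constructor
                     | apply occ_OrR; constructor | apply occ_ImpR; constructor
                     | apply occ_ImpL; constructor]].
    all: eapply occ_binder_of_var; [|eassumption|exact IH]; solve [left; eauto | right; eauto].
Qed.

Definition binder_pos (p : position Vr M) : Prop :=
  match p with Pos _ _ (NF (FMu _ _)) _ | Pos _ _ (NF (FNu _ _)) _ => True | _ => False end.

Lemma binder_pos_inv {p} : binder_pos p ->
  exists v c q x a, p = Pos M v (NF c) q /\ (c = FMu x a \/ c = FNu x a).
Proof.
  destruct p as [v [c| |] q]; simpl; try contradiction.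
  destruct c; try contradiction; intros _; do 5 eexists; split; eauto.
Qed.

Definition node_form (p : position Vr M) : form :=
  match p with
  | Pos _ _ (NF a) _ => a
  | Pos _ _ (NDia a) _ => FDia a
  | Pos _ _ (NImp a b) _ => FImp a b
  end.

Definition node_measure (p : position Vr M) : nat :=
  match p with
  | Pos _ _ (NF a) _ => 2 * size a
  | Pos _ _ (NDia a) _ => 2 * size a + 1
  | Pos _ _ (NImp a b) _ => 2 * (size a + size b) + 1
  end.

Definition var_pos (p : position Vr M) : Prop :=
  match p with Pos _ _ (NF (FV _)) _ => True | _ => False end.

Lemma node_measure_move p p' : move phi p p' -> ~ var_pos p -> node_measure p' < node_measure p.
Proof. intros Hm Hv; inversion Hm; subst; simpl in *; try contradiction; lia. Qed.

Lemma move_Sub p p' : move phi p p' -> ~ var_pos p -> Sub (node_form p') (node_form p).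
Proof.
  intros Hm Hv; inversion Hm; subst; simpl in *; try contradiction;
  solve [repeat constructor | apply Sub_AndR; constructor | apply Sub_OrR; constructor
        | apply Sub_ImpR; constructor | apply Sub_ImpL; constructor].
Qed.

Lemma move_size p v b q :
  move phi p (Pos M v (NF b) q) -> ~ var_pos p -> size b < size (node_form p).
Proof. intros Hm Hv; inversion Hm; subst; simpl in *; try contradiction; lia. Qed.

Lemma var_move_binder v x q p' : move phi (Pos M v (NF (FV x)) q) p' ->
  exists c, binds x c /\ Sub c phi /\ p' = Pos M v (NF c) q.
Proof.
  intros Hm; inversion Hm; subst.
  - eexists; split; [left; eauto|split; [eassumption|reflexivity]].
  - eexists; split; [right; eauto|split; [eassumption|reflexivity]].
Qed.

Section InfinitePlay.
Variable f : nat -> position Vr M.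
Hypothesis Hrun : infinite_run phi w0 f.

Lemma infinite_var_pos N : exists i, N <= i /\ var_pos (f i).
Proof.
  apply NNPP; intros Hn.
  assert (H : forall k, node_measure (f (N + k)) + k <= node_measure (f N)).
  { induction k; [rewrite !Nat.add_0_r; lia|].
    assert (Hv : ~ var_pos (f (N + k)))
      by (intros Hv; apply Hn; exists (N + k); split; [lia|exact Hv]).
    pose proof (node_measure_move (proj2 Hrun (N + k)) Hv) as Hd.
    replace (N + S k) with (S (N + k)) by lia; lia. }
  specialize (H (S (node_measure (f N)))); lia.
Qed.

Lemma regen_binder i c : regen f i c -> exists v q x, f i = Pos M v (NF (FV x)) q /\
  f (S i) = Pos M v (NF c) q /\ binds x c /\ Sub c phi.
Proof.
  intros [v [q [x [H1 [H2 H3]]]]]. exists v, q, x; split; auto; split; auto.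
  pose proof (proj2 Hrun i) as Hm. rewrite H1, H2 in Hm.
  destruct (var_move_binder Hm) as [c' [Hb [Hs E]]]. inversion E; subst; auto.
Qed.

Lemma var_pos_regen i : var_pos (f i) -> exists c x, regen f i c /\ binds x c /\ Sub c phi.
Proof.
  intros Hv. pose proof (proj2 Hrun i) as Hm. revert Hv Hm.
  destruct (f i) as [v n q] eqn:E; intros Hv Hm.
  destruct n as [a| |]; simpl in Hv; try contradiction; destruct a; simpl in Hv; try contradiction.
  destruct (var_move_binder Hm) as [c [Hb [Hs E']]].
  exists c, x; split; auto.
  exists v, q, x; split; auto; split; auto.
Qed.

Lemma regen_eventually_inf l : exists N, forall x c i, In x l -> binds x c -> Sub c phi ->
  N <= i -> regen f i c -> infRegen f c.
Proof.
  induction l as [|x l [N IH]].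
  - exists 0; intros x c i [].
  - destruct (classic (exists c, binds x c /\ Sub c phi /\ ~ infRegen f c))
      as [[c [Hb [Hs Hni]]]|Hall].
    + unfold infRegen in Hni. apply not_all_ex_not in Hni as [n Hn].
      exists (Nat.max N n). intros y c' i [<-|Hy] Hb' Hs' Hi Hr.
      * rewrite (binds_unique Hnd Hb' Hb Hs' Hs) in Hr |- *.
        exfalso; apply Hn; exists i; split; auto; lia.
      * apply (IH y c' i); auto; lia.
    + exists N. intros y c' i [<-|Hy] Hb' Hs' Hi Hr.
      * apply NNPP; intros Hn; apply Hall; exists c'; auto.
      * apply (IH y c' i); auto.
Qed.

Lemma regen_eventually_inf_all : exists N, forall i c, N <= i -> regen f i c -> infRegen f c.
Proof.
  destruct (regen_eventually_inf L) as [N HN]. exists N. intros i c Hi Hr.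
  destruct (regen_binder Hr) as [v [q [x [_ [_ [Hb Hs]]]]]].
  eapply HN; eauto. eapply binds_in_binders; eauto.
Qed.

Lemma largest_infRegen : exists c, infRegen f c /\ Sub c phi /\
  forall c', infRegen f c' -> size c' <= size c.
Proof.
  destruct regen_eventually_inf_all as [N HN].
  destruct (@ex_max_bounded (fun n => exists c, infRegen f c /\ Sub c phi /\ size c = n) (size phi))
    as [m [[c [Hc [Hs Hsz]]] Hmax]].
  - destruct (infinite_var_pos N) as [i [Hi Hv]].
    destruct (var_pos_regen _ Hv) as [c [x [Hr [Hb Hs]]]].
    exists (size c), c; split; auto; eapply HN; eauto.
  - intros n [c [_ [Hs <-]]]. apply Sub_size; auto.
  - exists c; split; [|split]; auto. intros c' Hc'. rewrite Hsz. apply Hmax.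
    exists c'; split; auto.
    destruct (Hc' 0) as [i [_ Hr]]. destruct (regen_binder Hr) as [v [q [x [_ [_ [_ Hs']]]]]]; auto.
Qed.

(* From some point on the play stays inside the largest infinitely
   regenerated binder, which is therefore the outermost one. *)
Lemma outermost_tail : exists c i0, outermostRegen f c /\ regen f i0 c /\ Sub c phi /\
  forall j, S i0 <= j -> Sub (node_form (f j)) c.
Proof.
  destruct regen_eventually_inf_all as [N HN].
  destruct largest_infRegen as [cs [Hcs [Hss Hmax]]].
  destruct (Hcs N) as [i0 [Hi0 Hr0]].
  assert (Hreg : forall j c', N <= j -> regen f j c' -> Sub (node_form (f j)) cs -> Sub c' cs).
  { intros j c' Hj Hr Hin.
    destruct (regen_binder Hr) as [v [q [x [E1 [E2 [Hb Hs]]]]]].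
    rewrite E1 in Hin; simpl in Hin.
    destruct (var_binder_scope Hin Hss Hb Hs) as [H|H]; auto.
    specialize (Hmax c' (HN j c' Hj Hr)); lia. }
  assert (Hin : forall d, Sub (node_form (f (S i0 + d))) cs).
  { induction d.
    - rewrite Nat.add_0_r. destruct (regen_binder Hr0) as [v [q [x [_ [E2 _]]]]].
      rewrite E2; simpl; constructor.
    - replace (S i0 + S d) with (S (S i0 + d)) by lia.
      destruct (classic (var_pos (f (S i0 + d)))) as [Hv|Hv].
      + destruct (var_pos_regen _ Hv) as [c' [x [Hr [Hb Hs]]]].
        destruct (regen_binder Hr) as [v [q [x' [E1 [E2 _]]]]].
        rewrite E2; simpl. apply (Hreg (S i0 + d) c'); [lia|exact Hr|exact IHd].
      + eapply Sub_trans; [|exact IHd]. apply move_Sub; auto. apply (proj2 Hrun). }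
  assert (Hin' : forall j, S i0 <= j -> Sub (node_form (f j)) cs).
  { intros j Hj. replace j with (S i0 + (j - S i0)) by lia. apply Hin. }
  exists cs, i0; split; [split; auto|split; auto].
  intros c' Hc'. destruct (Hc' (S i0)) as [j [Hj Hr]].
  apply (Hreg j c'); [lia|exact Hr|apply Hin'; auto].
Qed.

End InfinitePlay.

End Plays.

Definition role_of (pl : player) (q : role) := match pl with PI => q | PII => dual q end.

Lemma role_of_dual pl q : role_of pl (dual q) = dual (role_of pl q).
Proof. destruct pl; reflexivity. Qed.

Definition is_mu (c : form) := match c with FMu _ _ => True | _ => False end.

Definition is_nu (c : form) := match c with FNu _ _ => True | _ => False end.

(* A [nu] is approximated through the complement of its fixed point, so that
   the stages of every binder grow towards a least fixed point of [stage_op]. *)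
Definition stage (rho : env) (c : form) : set :=
  match c with FMu x _ => rho x | FNu x _ => fun w => ~ rho x w | _ => fun _ => False end.

Definition stage_op (rho : env) (c : form) : set -> set :=
  match c with
  | FMu x a => body_op rho x a
  | FNu x a => fun T w => ~ body_op rho x a (fun u => ~ T u) w
  | _ => fun T => T end.

Definition stage_value (c : form) (T : set) : set :=
  match c with FNu _ _ => fun w => ~ T w | _ => T end.

Lemma stage_op_mono rho x c : binds x c -> Sub c phi ->
  forall A B, set_incl A B -> set_incl (stage_op rho c A) (stage_op rho c B).
Proof.
  intros Hb Hs. destruct (binds_posv Hb Hs) as [a [[E|E] Hp]]; subst; simpl.
  - apply body_op_mono; auto.
  - intros A B H w Hw Hf; apply Hw. revert Hf.
    apply body_op_mono; auto. intros u Hu Hu'; exact (Hu (H u Hu')).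
Qed.

Lemma stage_agree x c (a b : env) : binds x c -> (forall w, a x w <-> b x w) ->
  forall w, stage a c w <-> stage b c w.
Proof. intros [[a' E]|[a' E]] H w; subst; simpl; rewrite H; tauto. Qed.

Lemma stage_ext (x : Vr) (c : form) (a b : env) : binds x c ->
  (forall w, a x w <-> b x w) -> stage a c = stage b c.
Proof. intros Hb H; apply set_ext; apply (@stage_agree x c a b Hb H). Qed.

Lemma stage_inj (x : Vr) (c : form) (a b : env) : binds x c ->
  (forall w, stage a c w <-> stage b c w) -> forall w, a x w <-> b x w.
Proof.
  intros [[a' E]|[a' E]] H w; subst; simpl in H; [apply H|].
  specialize (H w); split; intros H1; apply NNPP; tauto.
Qed.

Lemma stage_op_ext (x : Vr) (c : form) (a b : env) : binds x c ->
  (forall z, freeIn z c -> forall w, a z w <-> b z w) -> stage_op a c = stage_op b c.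
Proof.
  intros [[a' E]|[a' E]] H; subst; simpl; apply functional_extensionality; intros T;
    apply set_ext; intros w; unfold body_op.
  all: assert (E : forall A, sem (upd a x A) a' w <-> sem (upd b x A) a' w)
         by (intros A; apply sem_ext; intros z Hz u; apply upd_agree; intros Hne;
             apply H; constructor; auto).
  all: rewrite E; tauto.
Qed.

Section Player.
Variable pl : player.

Definition ranked_at (c : form) (q : role) :=
  (is_mu c /\ role_of pl q = Ver) \/ (is_nu c /\ role_of pl q = Ref).

Definition ranked (c : form) := exists q, occ phi Ver c q /\ ranked_at c q.

Definition binder_ok (rho : env) (c : form) :=
  (ranked c -> tower (stage_op rho c) (stage rho c)) /\
  (~ ranked c -> forall x, binds x c -> forall w, rho x w <-> sem rho c w).

Definition null_off_binders (rho : env) := forall x, ~ In x L -> forall w, ~ rho x w.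

Definition consistent (rho : env) :=
  (forall x c, binds x c -> Sub c phi -> binder_ok rho c) /\ null_off_binders rho.

Definition ranked_var x := exists c, binds x c /\ Sub c phi /\ ranked c.

Definition agree_at x (a b : env) := ranked_var x -> forall w, a x w <-> b x w.

Definition stage_lt x (a b : env) := exists c, binds x c /\ Sub c phi /\ ranked c /\
  set_incl (stage a c) (stage b c) /\ exists w, stage b c w /\ ~ stage a c w.

Fixpoint sig_lt (l : list Vr) (a b : env) : Prop :=
  match l with
  | [] => False
  | x :: l' => stage_lt x a b \/ (agree_at x a b /\ sig_lt l' a b)
  end.

Definition sig_eq (l : list Vr) (a b : env) := forall x, In x l -> agree_at x a b.

Definition sig_le l a b := sig_lt l a b \/ sig_eq l a b.

Lemma stage_lt_binder x c a b : stage_lt x a b -> binds x c -> Sub c phi ->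
  set_incl (stage a c) (stage b c) /\ exists w, stage b c w /\ ~ stage a c w.
Proof.
  intros [c' [Hb [Hs [_ H]]]] Hb' Hs'. rewrite (binds_unique Hnd Hb' Hb Hs' Hs); auto.
Qed.

Lemma agree_at_refl x a : agree_at x a a.
Proof. intros _ w; tauto. Qed.

Lemma agree_at_sym x a b : agree_at x a b -> agree_at x b a.
Proof. intros H Hp w; rewrite (H Hp); tauto. Qed.

Lemma agree_at_trans x a b c : agree_at x a b -> agree_at x b c -> agree_at x a c.
Proof. intros H1 H2 Hp w; rewrite (H1 Hp); auto. Qed.

Lemma stage_lt_trans x a b c : stage_lt x a b -> stage_lt x b c -> stage_lt x a c.
Proof.
  intros [c1 [H1 [H2 [H3 [H4 [w [H5 H6]]]]]]] Hbc.
  destruct (stage_lt_binder Hbc H1 H2) as [H7 [w' [H8 H9]]].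
  exists c1; split; [auto|split; [auto|split; [auto|split]]].
  - intros u Hu; apply H7, H4, Hu.
  - exists w'; split; auto.
Qed.

Lemma agree_stage_lt x a b c : agree_at x a b -> stage_lt x b c -> stage_lt x a c.
Proof.
  intros He [c1 [H1 [H2 [H3 [H4 [w [H5 H6]]]]]]].
  assert (Hp : ranked_var x) by (exists c1; auto).
  pose proof (@stage_agree x c1 _ _ H1 (He Hp)) as E.
  exists c1; split; [auto|split; [auto|split; [auto|split]]].
  - intros u Hu; apply H4; apply E; auto.
  - exists w; split; auto; rewrite E; auto.
Qed.

Lemma stage_lt_agree x a b c : stage_lt x a b -> agree_at x b c -> stage_lt x a c.
Proof.
  intros [c1 [H1 [H2 [H3 [H4 [w [H5 H6]]]]]]] He.
  assert (Hp : ranked_var x) by (exists c1; auto).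
  pose proof (@stage_agree x c1 _ _ H1 (He Hp)) as E.
  exists c1; split; [auto|split; [auto|split; [auto|split]]].
  - intros u Hu; apply E; auto.
  - exists w; split; auto; rewrite <- E; auto.
Qed.

Lemma stage_lt_irrefl x a : stage_lt x a a -> False.
Proof. intros [c1 [_ [_ [_ [_ [w [H1 H2]]]]]]]; auto. Qed.

Lemma sig_lt_irrefl l a : sig_lt l a a -> False.
Proof. induction l; simpl; auto. intros [H|[_ H]]; eauto using stage_lt_irrefl. Qed.

Lemma sig_lt_trans l a b c : sig_lt l a b -> sig_lt l b c -> sig_lt l a c.
Proof.
  induction l; simpl; auto.
  intros [H1|[H1 H1']] [H2|[H2 H2']].
  - left; eapply stage_lt_trans; eauto.
  - left; eapply stage_lt_agree; eauto.
  - left; eapply agree_stage_lt; eauto.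
  - right; split; eauto using agree_at_trans.
Qed.

Lemma sig_eq_lt l a b c : sig_eq l a b -> sig_lt l b c -> sig_lt l a c.
Proof.
  induction l; simpl; auto. intros He [H|[H H']].
  - left; eapply agree_stage_lt; [apply He; simpl; auto|exact H].
  - right; split; [eapply agree_at_trans; [apply He; simpl; auto|exact H]|]. apply IHl; auto.
    intros y Hy; apply He; simpl; auto.
Qed.

Lemma sig_lt_eq l a b c : sig_lt l a b -> sig_eq l b c -> sig_lt l a c.
Proof.
  induction l; simpl; auto. intros [H|[H H']] He.
  - left; eapply stage_lt_agree; [exact H|apply He; simpl; auto].
  - right; split; [eapply agree_at_trans; [exact H|apply He; simpl; auto]|]. apply IHl; auto.
    intros y Hy; apply He; simpl; auto.
Qed.

Lemma sig_eq_trans l a b c : sig_eq l a b -> sig_eq l b c -> sig_eq l a c.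
Proof. intros H1 H2 x Hx; eapply agree_at_trans; eauto. Qed.

Lemma sig_eq_sym l a b : sig_eq l a b -> sig_eq l b a.
Proof. intros H1 x Hx; apply agree_at_sym; auto. Qed.

Lemma sig_eq_refl l a : sig_eq l a a.
Proof. intros x _; apply agree_at_refl. Qed.

Lemma sig_le_trans l a b c : sig_le l a b -> sig_le l b c -> sig_le l a c.
Proof.
  intros [H1|H1] [H2|H2]; [left; eapply sig_lt_trans; eauto | left; eapply sig_lt_eq; eauto
  | left; eapply sig_eq_lt; eauto | right; eapply sig_eq_trans; eauto].
Qed.

Lemma sig_le_lt l a b c : sig_le l a b -> sig_lt l b c -> sig_lt l a c.
Proof. intros [H1|H1] H2; [eapply sig_lt_trans|eapply sig_eq_lt]; eauto. Qed.

Lemma sig_lt_le l a b c : sig_lt l a b -> sig_le l b c -> sig_lt l a c.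
Proof. intros H1 [H2|H2]; [eapply sig_lt_trans|eapply sig_lt_eq]; eauto. Qed.

Lemma sig_lt_app l1 l2 a b :
  sig_lt (l1 ++ l2) a b -> sig_lt l1 a b \/ (sig_eq l1 a b /\ sig_lt l2 a b).
Proof.
  induction l1; simpl; intros H.
  - right; split; auto; intros x [].
  - destruct H as [H|[H H']]; auto.
    destruct (IHl1 H') as [H1|[H1 H2]]; auto.
    right; split; auto. intros x [<-|Hx]; auto.
Qed.

Lemma sig_le_prefix l1 l2 a b : sig_le (l1 ++ l2) a b -> sig_le l1 a b.
Proof.
  intros [H|H].
  - destruct (sig_lt_app l1 l2 a b H) as [H1|[H1 _]]; [left|right]; auto.
  - right; intros x Hx; apply H; apply in_or_app; auto.
Qed.

Lemma sig_lt_snoc l x a b :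
  sig_lt (l ++ [x]) a b <-> sig_lt l a b \/ (sig_eq l a b /\ stage_lt x a b).
Proof.
  split.
  - intros H; destruct (sig_lt_app l [x] a b H) as [H1|[H1 [H2|[_ []]]]]; auto.
  - induction l; simpl; intros [H|[H1 H2]]; try contradiction; auto.
    + destruct H as [H|[H H']]; auto.
    + assert (Ha : agree_at a0 a b) by (apply H1; simpl; auto).
      right; split; auto. apply IHl; right; split; auto.
      intros y Hy; apply H1; simpl; auto.
Qed.

Lemma sig_eq_snoc l x a b : sig_eq (l ++ [x]) a b <-> sig_eq l a b /\ agree_at x a b.
Proof.
  split.
  - intros H; split; [intros y Hy|]; apply H; apply in_or_app; simpl; auto.
  - intros [H1 H2] y Hy; apply in_app_or in Hy; destruct Hy as [Hy|[<-|[]]]; auto.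
Qed.

Lemma binder_ok_ext (x : Vr) (c : form) (a b : env) : binds x c ->
  (forall z, (z = x \/ freeIn z c) -> forall w, a z w <-> b z w) ->
  binder_ok a c -> binder_ok b c.
Proof.
  intros Hb H [Hp Hn]; split.
  - intros P. rewrite <- (@stage_op_ext x c a b Hb (fun z Hz => H z (or_intror Hz))).
    rewrite <- (@stage_ext x c a b Hb (H x (or_introl eq_refl))). auto.
  - intros nP y Hy w. rewrite (binds_var Hy Hb) in *.
    rewrite <- (H x (or_introl eq_refl)). rewrite (Hn nP x Hb w).
    apply sem_ext; intros z Hz u; apply H; auto.
Qed.

Lemma consistent_agree l0 : forall r a b, consistent a -> consistent b ->
  L = l0 ++ r -> sig_eq l0 a b ->
  forall y, In y l0 -> forall w, a y w <-> b y w.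
Proof.
  induction l0 as [|x l IH] using rev_ind; intros r a b Ha Hb HL He y Hy w.
  - destruct Hy.
  - rewrite <- app_assoc in HL; simpl in HL.
    apply sig_eq_snoc in He as [He1 He2].
    apply in_app_or in Hy as [Hy|[<-|[]]].
    + eapply IH; eauto.
    + assert (HxL : In x L) by (rewrite HL; apply in_or_app; simpl; auto).
      destruct (In_binders_binds HxL) as [c [Hbc Hsc]].
      destruct (classic (ranked c)) as [P|nP].
      * apply He2; exists c; auto.
      * rewrite (proj2 (proj1 Ha x c Hbc Hsc) nP x Hbc w).
        rewrite (proj2 (proj1 Hb x c Hbc Hsc) nP x Hbc w).
        apply sem_ext; intros z Hz u. eapply IH; eauto.
        eapply free_binder_before; eauto.
Qed.

Lemma sig_least l : forall r (S : env -> Prop), L = l ++ r ->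
  (forall rho, S rho -> consistent rho) ->
  (exists rho, S rho) -> exists m, S m /\ forall rho, S rho -> sig_le l m rho.
Proof.
  induction l as [|x l IH] using rev_ind; intros r S HL HS [rho0 H0].
  - exists rho0; split; auto; intros rho _; right; intros y [].
  - rewrite <- app_assoc in HL; simpl in HL.
    destruct (IH _ S HL HS (ex_intro _ rho0 H0)) as [m0 [Hm0 Hmin]].
    assert (HxL : In x L) by (rewrite HL; apply in_or_app; simpl; auto).
    destruct (In_binders_binds HxL) as [c [Hbc Hsc]].
    destruct (classic (ranked c)) as [P|nP].
    + set (K := fun T => exists rho, (S rho /\ sig_eq l rho m0) /\ stage rho c = T).
      assert (HK : forall T, K T -> tower (stage_op m0 c) T).
      { intros T [rho [[Hr He] <-]].
        rewrite <- (@stage_op_ext x c rho m0 Hbc).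
        - apply (proj1 (proj1 (HS rho Hr) x c Hbc Hsc)); auto.
        - intros z Hz u. eapply consistent_agree; eauto.
          eapply free_binder_before; eauto. }
      assert (HK0 : exists T, K T)
        by (exists (stage m0 c), m0; split; [split; [exact Hm0|apply sig_eq_refl]|reflexivity]).
      destruct (tower_wf (@stage_op_mono m0 x c Hbc Hsc) K HK HK0)
        as [T [[m [[Hm Hem] <-]] Hleast]].
      exists m; split; auto. intros rho Hr.
      destruct (Hmin rho Hr) as [Hlt|Heq].
      * left; apply sig_lt_snoc; left. eapply sig_eq_lt; eauto.
      * assert (Hinc : set_incl (stage m c) (stage rho c)).
        { apply Hleast. exists rho; split; auto; split; auto; apply sig_eq_sym; auto. }
        destruct (classic (exists w, stage rho c w /\ ~ stage m c w)) as [Hs|Hs].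
        -- left; apply sig_lt_snoc; right; split.
           ++ eapply sig_eq_trans; eauto.
           ++ exists c; repeat split; auto.
        -- right; apply sig_eq_snoc; split.
           ++ eapply sig_eq_trans; eauto.
           ++ intros _. apply (@stage_inj x c m rho Hbc). intros w; split; auto.
              intros Hw; apply NNPP; intro Hn; apply Hs; exists w; auto.
    + exists m0; split; auto. intros rho Hr.
      destruct (Hmin rho Hr) as [Hlt|Heq].
      * left; apply sig_lt_snoc; auto.
      * right; apply sig_eq_snoc; split; auto.
        intros [c' [Hb' [Hs' P']]]. rewrite (binds_unique Hnd Hb' Hbc Hs' Hsc) in P'. contradiction.
Qed.

Definition consistent_on (l : list Vr) (rho : env) :=
  forall y c, In y l -> binds y c -> Sub c phi -> binder_ok rho c.

Lemma consistent_of rho : consistent_on L rho -> null_off_binders rho -> consistent rho.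
Proof.
  intros H1 H2; split; auto. intros x c Hb Hs; eapply H1; eauto; eapply binds_in_binders; eauto.
Qed.

Lemma consistent_on_snoc l x r c (rho : env) (V : set) :
  L = l ++ x :: r -> binds x c -> Sub c phi ->
  consistent_on l rho -> binder_ok (upd rho x V) c -> consistent_on (l ++ [x]) (upd rho x V).
Proof.
  intros HL Hb Hs HP Hc y c' Hy Hb' Hs'.
  apply in_app_or in Hy as [Hy|[<-|[]]].
  - assert (Hx : ~ In x l) by (apply (NoDup_split_notin l r); rewrite <- HL; auto).
    apply (@binder_ok_ext y c' rho (upd rho x V) Hb'); [|eapply HP; eauto].
    intros z Hz w. rewrite upd_neq; [tauto|].
    destruct Hz as [->|Hz].
    + intros ->; contradiction.
    + destruct (in_split _ _ Hy) as [l1 [l2 El]].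
      assert (Hz' : In z l1).
      { eapply (@free_binder_before y c' z l1 (l2 ++ x :: r)); eauto.
        rewrite HL, El, <- app_assoc; reflexivity. }
      intros ->; apply Hx; rewrite El; apply in_or_app; auto.
  - rewrite (binds_unique Hnd Hb' Hb Hs' Hs); auto.
Qed.

Lemma consistent_extend r : forall l (rho : env),
  L = l ++ r -> consistent_on l rho -> null_off_binders rho ->
  exists rho', consistent rho' /\ forall y, In y l -> forall w, rho' y w <-> rho y w.
Proof.
  induction r as [|x r IH]; intros l rho HL HP HU.
  - rewrite app_nil_r in HL; subst. exists rho; split; [apply consistent_of; auto| tauto].
  - assert (HxL : In x L) by (rewrite HL; apply in_or_app; simpl; auto).
    destruct (In_binders_binds HxL) as [c [Hbc Hsc]].
    assert (Hx : ~ In x l) by (apply (NoDup_split_notin l r); rewrite <- HL; auto).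
    assert (Hfc : forall z, freeIn z c -> z <> x) by (intros z Hz; eapply binds_not_free; eauto).
    assert (Hnew : exists V : set, binder_ok (upd rho x V) c).
    { destruct (classic (ranked c)) as [P|nP].
      - exists (stage_value c (fun _ => False)). split; [|intros; contradiction].
        intros _.
        replace (stage (upd rho x (stage_value c (fun _ => False))) c) with (fun _ : W M => False).
        + apply tower_empty.
        + apply set_ext; intros w.
          destruct Hbc as [[a E]|[a E]]; subst; simpl; rewrite upd_eq; tauto.
      - exists (sem rho c). split; [intros; contradiction|].
        intros _ y Hy w. rewrite (binds_var Hy Hbc), upd_eq.
        apply sem_ext; intros z Hz u. rewrite upd_neq; [tauto|auto]. }
    destruct Hnew as [V HV].
    assert (HP1 : consistent_on (l ++ [x]) (upd rho x V)) by (eapply consistent_on_snoc; eauto).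
    assert (HU1 : null_off_binders (upd rho x V)).
    { intros z Hz w. rewrite upd_neq; [apply HU; auto|]. intros ->; contradiction. }
    destruct (IH (l ++ [x]) (upd rho x V) ltac:(rewrite <- app_assoc; auto) HP1 HU1)
      as [rho' [Hc Hag]].
    exists rho'; split; auto. intros y Hy w.
    rewrite Hag by (apply in_or_app; auto). rewrite upd_neq; [tauto|].
    intros ->; contradiction.
Qed.

Lemma consistent_exists : exists rho, consistent rho.
Proof.
  destruct (@consistent_extend L [] (fun _ _ => False)) as [rho [H _]]; auto.
  - intros y c [].
  - intros x _ w [].
  - exists rho; auto.
Qed.

Lemma consistent_reset (rho : env) l0 r x c (T : set) : consistent rho -> L = l0 ++ x :: r ->
  binds x c -> Sub c phi -> ranked c -> tower (stage_op rho c) T ->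
  exists rho', consistent rho' /\ (forall y, In y l0 -> forall w, rho' y w <-> rho y w) /\
    (forall w, stage rho' c w <-> T w).
Proof.
  intros Hc HL Hb Hs P HT.
  assert (Hx : ~ In x l0) by (apply (NoDup_split_notin l0 r); rewrite <- HL; auto).
  assert (Hfc : forall z, freeIn z c -> z <> x) by (intros z Hz; eapply binds_not_free; eauto).
  assert (Hkey : forall w, stage (upd rho x (stage_value c T)) c w <-> T w).
  { intros w; destruct Hb as [[a E]|[a E]]; subst; simpl; rewrite upd_eq; [tauto|].
    split; intros H; [apply NNPP|]; tauto. }
  assert (HV : binder_ok (upd rho x (stage_value c T)) c).
  { split; [|intros; contradiction].
    intros _.
    replace (stage (upd rho x (stage_value c T)) c) with T by (symmetry; apply set_ext; exact Hkey).
    rewrite (@stage_op_ext x c (upd rho x (stage_value c T)) rho Hb); auto.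
    intros z Hz w; rewrite upd_neq; [tauto|auto]. }
  assert (HP0 : consistent_on l0 rho) by (intros y c' _ Hb' Hs'; apply (proj1 Hc y c' Hb' Hs')).
  assert (HP1 : consistent_on (l0 ++ [x]) (upd rho x (stage_value c T)))
    by (eapply consistent_on_snoc; eauto).
  assert (HU1 : null_off_binders (upd rho x (stage_value c T))).
  { intros z Hz w.
    assert (z <> x) by (intros ->; apply Hz; rewrite HL; apply in_or_app; simpl; auto).
    rewrite upd_neq; auto. apply (proj2 Hc); auto. }
  destruct (@consistent_extend r (l0 ++ [x]) _ ltac:(rewrite <- app_assoc; auto) HP1 HU1)
    as [rho' [Hc' Hag]].
  exists rho'; split; auto; split.
  - intros y Hy w. rewrite Hag by (apply in_or_app; auto). rewrite upd_neq; [tauto|].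
    intros ->; contradiction.
  - intros w. rewrite <- Hkey. apply (@stage_agree x c rho' _ Hb).
    intros u; apply Hag; apply in_or_app; simpl; auto.
Qed.

Definition node_holds (rho : env) (n : node Pr Vr) (v : W M) : Prop :=
  match n with
  | NF a => sem rho a v
  | NDia a => exists u, R M v u /\ sem rho a u
  | NImp a b => ~ sem rho a v \/ sem rho b v
  end.

Definition claim_ok (rho : env) (p : position Vr M) : Prop :=
  match p with
  | Pos _ v n q =>
      match role_of pl q with Ver => node_holds rho n v | Ref => ~ node_holds rho n v end
  end.

Lemma owns_iff_claim_role (p : position Vr M) :
  ownsPos phi p pl <-> (verOwned phi p <-> role_of pl (roleOf p) = Ver).
Proof.
  destruct p as [v n q]; destruct (classic (verOwned phi (Pos M v n q))) as [H|H];
  destruct pl, q; simpl in *;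
  assert (Ref <> Ver) by discriminate; assert (Ver <> Ref) by discriminate;
  assert (Ver = Ver) by reflexivity; assert (Ref = Ref) by reflexivity; tauto.
Qed.

Definition local_node (n : node Pr Vr) : Prop :=
  match n with NF (FV _) | NF (FMu _ _) | NF (FNu _ _) => False | _ => True end.

Local Ltac roles :=
  repeat (rewrite ?role_of_dual; match goal with H : role_of pl _ = _ |- _ => rewrite H end); simpl.

Lemma local_owner_keeps_claim (rho : env) v (n : node Pr Vr) q : local_node n ->
  claim_ok rho (Pos M v n q) -> ownsPos phi (Pos M v n q) pl ->
  (exists p', move phi (Pos M v n q) p') -> exists p', move phi (Pos M v n q) p' /\ claim_ok rho p'.
Proof.
  intros Hs Hg. rewrite owns_iff_claim_role. simpl roleOf.
  destruct n as [a|a|a b]; [destruct a| |]; simpl in Hs; try contradiction;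
  unfold claim_ok in Hg; simpl verOwned;
  destruct (role_of pl q) eqn:Er; simpl in Hg; intros Ho.
  1-4: intros [p' Hm]; inversion Hm.
  all: try solve [exfalso; destruct Ho as [H1 H2]; first [apply H2; auto | discriminate (H1 I)]].
  - intros _. apply not_and_or in Hg as [H|H];
      [exists (Pos M v (NF a1) q) | exists (Pos M v (NF a2) q)];
      split; try constructor; simpl; roles; auto.
  - intros _. destruct Hg as [H|H];
      [exists (Pos M v (NF a1) q) | exists (Pos M v (NF a2) q)];
      split; try constructor; simpl; roles; auto.
  - intros _. apply not_all_ex_not in Hg as [u Hu].
    apply imply_to_and in Hu as [Hu1 Hu2]. apply imply_to_and in Hu2 as [Hu2 Hu3].
    exists (Pos M u (NImp a1 a2) q); split; [constructor; auto|]; simpl; roles; tauto.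
  - intros _. apply not_all_ex_not in Hg as [v' Hv].
    apply not_all_ex_not in Hv as [u Hu].
    apply imply_to_and in Hu as [Hu1 Hu2]. apply imply_to_and in Hu2 as [Hu2 Hu3].
    exists (Pos M u (NF a) q); split; [econstructor; eauto|]; simpl; roles; tauto.
  - intros _. apply not_all_ex_not in Hg as [u Hu].
    apply imply_to_and in Hu as [Hu1 Hu2].
    exists (Pos M u (NDia a) q); split; [constructor; auto|]; simpl; roles; tauto.
  - intros _. destruct Hg as [u [Hu1 Hu2]].
    exists (Pos M u (NF a) q); split; [constructor; auto|]; simpl; roles; auto.
  - intros _. destruct Hg as [H|H];
      [exists (Pos M v (NF a) (dual q)) | exists (Pos M v (NF b) q)];
      split; try constructor; simpl; roles; auto.
Qed.

Lemma local_other_keeps_claim (rho : env) v (n : node Pr Vr) q : local_node n ->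
  claim_ok rho (Pos M v n q) -> ~ ownsPos phi (Pos M v n q) pl ->
  forall p', move phi (Pos M v n q) p' -> claim_ok rho p'.
Proof.
  intros Hs Hg. rewrite owns_iff_claim_role. simpl roleOf.
  destruct n as [a|a|a b]; [destruct a| |]; simpl in Hs; try contradiction;
  unfold claim_ok in Hg; simpl verOwned;
  destruct (role_of pl q) eqn:Er; simpl in Hg; intros Ho p' Hm; inversion Hm; subst.
  all: try solve [exfalso; apply Ho; first [tauto | split; intros; [contradiction|discriminate]]].
  all: simpl; roles; eauto; try tauto.
  destruct (classic (sem rho a1 u)); auto.
Qed.

Lemma stuck_not_owned (rho : env) (p : position Vr M) : consistent rho -> claim_ok rho p ->
  (forall p', ~ move phi p p') -> ~ ownsPos phi p pl.
Proof.
  intros Hc Hg Hn. rewrite owns_iff_claim_role. destruct p as [v n q]. simpl roleOf.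
  unfold claim_ok in Hg.
  destruct n as [a|a|a b]; [destruct a| |]; simpl verOwned;
  destruct (role_of pl q) eqn:Er; simpl in Hg; intros Ho.
  all: try (apply (Hn (Pos M v (NF a1) q)); constructor; fail).
  all: try (apply (Hn (Pos M v (NImp a1 a2) q)); constructor; apply le_refl; fail).
  all: try (apply (Hn (Pos M v (NDia a) q)); constructor; apply le_refl; fail).
  all: try (apply (Hn (Pos M v (NF a) q)); constructor; fail).
  all: try (apply (Hn (Pos M v (NF b) q)); constructor; fail).
  - exact (proj2 Ho eq_refl Hg).
  - discriminate (proj1 Ho Hg).
  - destruct (classic (In x L)) as [HL|HL].
    + destruct (In_binders_binds HL) as [c [[[a E]|[a E]] Hs]]; subst;
        [apply (Hn (Pos M v (NF (FMu x a)) q)) | apply (Hn (Pos M v (NF (FNu x a)) q))];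
        constructor; auto.
    + apply (proj2 Hc x HL v Hg).
  - assert (Hno : ~ exists a, Sub (FNu x a) phi).
    { intros [a Ha]; apply (Hn (Pos M v (NF (FNu x a)) q)); constructor; auto. }
    specialize (proj1 Ho Hno); discriminate.
  - exact (proj2 Ho eq_refl Hg).
  - discriminate (proj1 Ho Hg).
  - specialize (proj2 Ho eq_refl); auto.
  - apply Hg. intros v' u H1 H2. exfalso; apply (Hn (Pos M u (NF a) q)); econstructor; eauto.
  - destruct Hg as [u [Hu1 Hu2]]. apply (Hn (Pos M u (NF a) q)); constructor; auto.
  - specialize (proj1 Ho I); discriminate.
Qed.

Lemma ranked_at_occ (c : form) x q : ranked c -> binds x c -> occ phi Ver c q -> ranked_at c q.
Proof.
  intros [q' [Ho H]] Hb Ho'. rewrite (occ_binder_role Hnd Hb Ho' Ho); auto.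
Qed.

Lemma claim_var_stage (rho : env) x c q v : binds x c -> ranked_at c q ->
  (claim_ok rho (Pos M v (NF (FV x)) q) <-> stage rho c v).
Proof.
  intros [[a E]|[a E]] [[H1 H2]|[H1 H2]]; subst; simpl in *; try contradiction;
  rewrite H2; simpl; tauto.
Qed.

Lemma claim_binder_of_tower (rho : env) x c q v (T : set) :
  binds x c -> Sub c phi -> ranked_at c q ->
  tower (stage_op rho c) T -> T v -> claim_ok rho (Pos M v (NF c) q).
Proof.
  intros Hb Hs Hr HT Hv. pose proof (@stage_op_mono rho x c Hb Hs) as Hm.
  destruct (binds_posv Hb Hs) as [a [[E|E] Hp]]; subst;
  destruct Hr as [[H1 H2]|[H1 H2]]; simpl in *; try contradiction; rewrite H2.
  - intros P HP. exact (tower_below Hm (P:=P) HP HT v Hv).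
  - intros [A [HA HAv]].
    assert (HP : set_incl (stage_op rho (FNu x a) (fun w => ~ A w)) (fun w => ~ A w)).
    { simpl; intros w Hw HAw; apply Hw.
      exact (body_op_mono rho Hp (A:=A) (B:=fun u => ~~A u) (fun u Hu Hu' => Hu' Hu) w
               (HA w HAw)). }
    exact (tower_below Hm HP HT v Hv HAv).
Qed.

Lemma claim_binder_lfp (rho : env) x c q v : binds x c -> Sub c phi -> ranked_at c q ->
  claim_ok rho (Pos M v (NF c) q) -> lfp_mem (stage_op rho c) v.
Proof.
  intros Hb Hs Hr Hg.
  destruct (binds_posv Hb Hs) as [a [[E|E] Hp]]; subst;
  destruct Hr as [[H1 H2]|[H1 H2]]; simpl in *; try contradiction; rewrite H2 in Hg;
  simpl in Hg.
  - intros P HP; apply Hg; auto.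
  - intros P HP. apply NNPP; intros HPv. apply Hg.
    exists (fun w => ~ P w); split; auto.
    intros w Hw. apply NNPP; intros Hf. apply Hw, HP. simpl. exact Hf.
Qed.

Lemma claim_body_stage_op (rho rho' : env) x a c q v (T : set) :
  (c = FMu x a \/ c = FNu x a) -> ranked_at c q ->
  (forall z, freeIn z a -> z <> x -> forall w, rho' z w <-> rho z w) ->
  (forall w, stage rho' c w <-> T w) ->
  (claim_ok rho' (Pos M v (NF a) q) <-> stage_op rho c T v).
Proof.
  intros E Hr Hag Hk.
  destruct E; subst; destruct Hr as [[H1 H2]|[H1 H2]]; simpl in *; try contradiction;
  rewrite H2; simpl; unfold body_op.
  - apply sem_ext; intros z Hz u. destruct (classic (z = x)) as [->|Hne].
    + rewrite upd_eq; apply Hk.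
    + rewrite upd_neq; auto.
  - assert (E : sem rho' a v <-> sem (upd rho x (fun u => ~ T u)) a v).
    { apply sem_ext; intros z Hz u. destruct (classic (z = x)) as [->|Hne].
      + rewrite upd_eq. specialize (Hk u). split; intros H; [intro; apply Hk in H0; auto|].
        apply NNPP; intro H'; apply H; apply Hk; auto.
      + rewrite upd_neq; auto. }
    rewrite E; tauto.
Qed.

Lemma unranked_unfold (rho : env) x a c v : consistent rho -> (c = FMu x a \/ c = FNu x a) ->
  Sub c phi -> ~ ranked c -> (sem rho c v <-> sem rho a v).
Proof.
  intros Hc E Hs nP.
  assert (Hb : binds x c) by (destruct E; [left|right]; eauto).
  destruct (binds_posv Hb Hs) as [a' [E' Hp]].
  assert (a' = a) by (destruct E, E'; subst; inversion H0; auto). subst a'.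
  pose proof (proj2 (proj1 Hc x c Hb Hs) nP x Hb) as Hx.
  assert (Hagr : forall w, sem (upd rho x (sem rho c)) a w <-> sem rho a w).
  { intros w; apply sem_ext; intros z _ u. destruct (classic (z = x)) as [->|Hne].
    - rewrite upd_eq; rewrite Hx; tauto.
    - rewrite upd_neq; tauto. }
  destruct E; subst.
  - rewrite sem_Mu_unfold by auto. unfold body_op. apply Hagr.
  - rewrite sem_Nu_unfold by auto. unfold body_op. apply Hagr.
Qed.

Lemma var_move_claim (rho : env) v x q p' :
  consistent rho -> claim_ok rho (Pos M v (NF (FV x)) q) ->
  occ phi Ver (FV x) q -> move phi (Pos M v (NF (FV x)) q) p' -> claim_ok rho p'.
Proof.
  intros Hc Hg Ho Hm.
  destruct (var_move_binder Hm) as [c [Hb [Hs ->]]].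
  pose proof (occ_binder_of_var Hb Hs Ho) as Hoc.
  destruct (classic (ranked c)) as [P|nP].
  - pose proof (ranked_at_occ P Hb Hoc) as Hr.
    apply (@claim_binder_of_tower rho x c q v (stage rho c) Hb Hs Hr).
    + apply (proj1 (proj1 Hc x c Hb Hs)); auto.
    + apply (@claim_var_stage rho x c q v Hb Hr); auto.
  - destruct (binds_shape Hb) as [a E].
    unfold claim_ok in *. pose proof (proj2 (proj1 Hc x c Hb Hs) nP x Hb v) as Hx.
    simpl in *. destruct (role_of pl q); rewrite <- Hx; auto.
Qed.

Lemma unranked_unfold_claim (rho : env) v c x a q :
  consistent rho -> (c = FMu x a \/ c = FNu x a) ->
  Sub c phi -> ~ ranked c -> claim_ok rho (Pos M v (NF c) q) -> claim_ok rho (Pos M v (NF a) q).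
Proof.
  intros Hc E Hs nP. unfold claim_ok; simpl. pose proof (unranked_unfold v Hc E Hs nP) as H.
  destruct (role_of pl q); tauto.
Qed.

(* The claim puts [v] in the least fixed point of [stage_op], hence in the
   step of some stage, which becomes the new value of the bound variable. *)
Lemma ranked_unfold_claim (rho : env) v c x a q {l0 r : list Vr} :
  consistent rho -> (c = FMu x a \/ c = FNu x a) ->
  Sub c phi -> ranked c -> occ phi Ver c q -> L = l0 ++ x :: r ->
  claim_ok rho (Pos M v (NF c) q) ->
  exists rho', consistent rho' /\ (forall y, In y l0 -> forall w, rho' y w <-> rho y w) /\
    claim_ok rho' (Pos M v (NF a) q).
Proof.
  intros Hc E Hs P Ho HL Hg.
  assert (Hb : binds x c) by (destruct E; [left|right]; eauto).
  pose proof (ranked_at_occ P Hb Ho) as Hr.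
  pose proof (@claim_binder_lfp rho x c q v Hb Hs Hr Hg) as Hl.
  destruct (tower_lfp (@stage_op_mono rho x c Hb Hs) Hl) as [U [HU HUv]].
  destruct (@consistent_reset rho l0 r x c U Hc HL Hb Hs P HU) as [rho' [Hc' [Hag Hk]]].
  exists rho'; split; auto; split; auto.
  apply (@claim_body_stage_op rho rho' x a c q v U E Hr); auto.
  intros z Hz Hne w. apply Hag. eapply (@free_binder_before x c z l0 r); eauto.
  eapply freeIn_binder_body; eauto.
Qed.

(* The new value of the regenerated variable is the stage at which [v]
   entered its old value: strictly smaller, and still enough for the body. *)
Lemma ranked_regen_claim (rho : env) v c x a q {l0 r : list Vr} :
  consistent rho -> (c = FMu x a \/ c = FNu x a) ->
  Sub c phi -> ranked c -> occ phi Ver c q -> L = l0 ++ x :: r ->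
  claim_ok rho (Pos M v (NF (FV x)) q) ->
  exists rho', consistent rho' /\ sig_lt (l0 ++ [x]) rho' rho /\ claim_ok rho' (Pos M v (NF a) q).
Proof.
  intros Hc E Hs P Ho HL Hg.
  assert (Hb : binds x c) by (destruct E; [left|right]; eauto).
  pose proof (ranked_at_occ P Hb Ho) as Hr.
  apply (@claim_var_stage rho x c q v Hb Hr) in Hg.
  assert (HT : tower (stage_op rho c) (stage rho c)) by (apply (proj1 (proj1 Hc x c Hb Hs)); auto).
  destruct (tower_entry (@stage_op_mono rho x c Hb Hs) v HT Hg) as [U [HU [HUi [HUv HOU]]]].
  destruct (@consistent_reset rho l0 r x c U Hc HL Hb Hs P HU) as [rho' [Hc' [Hag Hk]]].
  exists rho'; split; auto; split.
  - apply sig_lt_snoc; right; split.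
    + intros y Hy _; apply Hag; auto.
    + exists c; split; auto; split; auto; split; auto; split.
      * intros w Hw; apply HUi, Hk, Hw.
      * exists v; split; auto. rewrite Hk; auto.
  - apply (@claim_body_stage_op rho rho' x a c q v U E Hr); auto.
    intros z Hz Hne w. apply Hag. eapply (@free_binder_before x c z l0 r); eauto.
    eapply freeIn_binder_body; eauto.
Qed.

Variable w0 : W M.

Definition claimable (p : position Vr M) := exists rho, consistent rho /\ claim_ok rho p.

Definition least_witness (p : position Vr M) (m : env) :=
  consistent m /\ claim_ok m p /\ forall rho, consistent rho -> claim_ok rho p -> sig_le L m rho.

Definition least_env (p : position Vr M) : env :=
  epsilon (inhabits (fun _ _ => False)) (least_witness p).

Lemma least_env_spec p : claimable p -> least_witness p (least_env p).
Proof.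
  intros [rho0 [H1 H2]]. unfold least_env. apply epsilon_spec.
  destruct (@sig_least L [] (fun rho => consistent rho /\ claim_ok rho p)
             ltac:(rewrite app_nil_r; auto)
    ltac:(intros rho [H _]; auto) ltac:(exists rho0; auto)) as [m [[Hm1 Hm2] Hm3]].
  exists m; split; [auto|split; [auto|]]. intros rho H3 H4; apply Hm3; auto.
Qed.

Definition preferred_move (p p' : position Vr M) : Prop :=
  move phi p p' /\
  (claim_ok (least_env p) p' \/ ~ exists p'', move phi p p'' /\ claim_ok (least_env p) p'').

Definition strategy (p : position Vr M) : position Vr M :=
  epsilon (inhabits p) (preferred_move p).

Lemma strategy_preferred p : (exists p', move phi p p') -> preferred_move p (strategy p).
Proof.
  intros [p0 Hp0]. unfold strategy. apply epsilon_spec.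
  destruct (classic (exists p'', move phi p p'' /\ claim_ok (least_env p) p'')) as [[p1 [H1 H2]]|H].
  - exists p1; split; auto.
  - exists p0; split; auto.
Qed.

Lemma strategy_move p : (exists p', move phi p p') -> move phi p (strategy p).
Proof. intros H; apply (strategy_preferred H). Qed.

Lemma strategy_claim p : (exists p', move phi p p' /\ claim_ok (least_env p) p') ->
  claim_ok (least_env p) (strategy p).
Proof.
  intros Hex. destruct (strategy_preferred (p := p)) as [_ [H|H]]; auto.
  - destruct Hex as [p' [Hm _]]; eauto.
  - contradiction.
Qed.

Lemma strategy_legal : strategy_for phi pl strategy.
Proof. intros p _ _ H; apply strategy_move; auto. Qed.

Lemma claim_step_nonbinder p p' : reachable phi w0 p -> claimable p -> move phi p p' ->
  (ownsPos phi p pl -> p' = strategy p) -> ~ binder_pos p -> claim_ok (least_env p) p'.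
Proof.
  intros Hr HG Hm Hs Hnb.
  destruct (least_env_spec HG) as [Hc [Hg _]].
  pose proof (reachable_occ Hr) as Ho.
  destruct p as [v n q].
  assert (Hsimple : (exists x, n = NF (FV x)) \/ local_node n).
  { destruct n as [a|a|a b]; [destruct a| |]; simpl in Hnb; try contradiction; simpl; eauto. }
  destruct Hsimple as [[x ->]|Hsn].
  - eapply var_move_claim; eauto.
  - destruct (classic (ownsPos phi (Pos M v n q) pl)) as [Hown|Hown].
    + rewrite (Hs Hown). apply strategy_claim, local_owner_keeps_claim; eauto.
    + eapply local_other_keeps_claim; eauto.
Qed.

Definition bound_before (p : position Vr M) (y : Vr) : Prop :=
  forall v c q x l1 r1, p = Pos M v (NF c) q -> binds x c -> L = l1 ++ x :: r1 -> In y l1.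

(* Only a ranked unfolding changes the least valuation, and then only from
   the unfolded binder onwards. *)
Lemma claim_step p p' : reachable phi w0 p -> claimable p -> move phi p p' ->
  (ownsPos phi p pl -> p' = strategy p) ->
  exists rho, consistent rho /\ claim_ok rho p' /\
    forall y, bound_before p y -> forall w, rho y w <-> least_env p y w.
Proof.
  intros Hr HG Hm Hs. destruct (least_env_spec HG) as [Hc [Hg _]].
  destruct (classic (binder_pos p)) as [Hb|Hb].
  2: { exists (least_env p); split; [exact Hc|split; [eapply claim_step_nonbinder; eauto|tauto]]. }
  destruct (binder_pos_inv Hb) as [v [c [q [x [a [-> E]]]]]].
  pose proof (reachable_occ Hr) as Ho; simpl in Ho. pose proof (occ_Sub Ho) as Hsc.
  assert (Hbc : binds x c) by (destruct E; [left|right]; eauto).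
  assert (Ep' : p' = Pos M v (NF a) q) by (destruct E; subst; inversion Hm; auto); subst p'.
  destruct (classic (ranked c)) as [P|nP].
  - destruct (in_split _ _ (binds_in_binders Hbc Hsc)) as [l0 [r HL]].
    destruct (ranked_unfold_claim v Hc E Hsc P Ho HL Hg) as [rho' [Hc' [Hag Hg']]].
    exists rho'; split; [exact Hc'|split; [exact Hg'|]].
    intros y Hy; apply Hag; eapply Hy; eauto.
  - exists (least_env (Pos M v (NF c) q)); split; [exact Hc|split; [|tauto]].
    eapply unranked_unfold_claim; eauto.
Qed.

Lemma claimable_step p p' : reachable phi w0 p -> claimable p -> move phi p p' ->
  (ownsPos phi p pl -> p' = strategy p) -> claimable p'.
Proof.
  intros Hr HG Hm Hs. destruct (claim_step Hr HG Hm Hs) as [rho [Hc [Hg _]]]; exists rho; auto.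
Qed.

Lemma play_claimable (f : nat -> position Vr M) n :
  f 0 = init M phi w0 -> claimable (init M phi w0) ->
  (forall i, i < n -> move phi (f i) (f (S i))) ->
  (forall i, i < n -> ownsPos phi (f i) pl -> f (S i) = strategy (f i)) ->
  forall i, i <= n -> reachable phi w0 (f i) /\ claimable (f i).
Proof.
  intros H0 HG Hm Hs i; induction i; intros Hi.
  - rewrite H0; split; auto; constructor.
  - destruct IHi as [Hr Hg]; [lia|].
    split; [eapply reach_step; [exact Hr|apply Hm; lia]|].
    apply (@claimable_step (f i) (f (S i)) Hr Hg); [apply Hm; lia|intros; apply Hs; auto; lia].
Qed.

Lemma finite_play_win (f : nat -> position Vr M) n :
  claimable (init M phi w0) -> finite_run phi w0 f n ->
  (forall i, i < n -> ownsPos phi (f i) pl -> f (S i) = strategy (f i)) ->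
  wins_finite phi pl f n.
Proof.
  intros HG [H0 [Hm Hn]] Hs.
  destruct (@play_claimable f n H0 HG Hm Hs n (le_n n)) as [Hr Hg].
  destruct (least_env_spec Hg) as [Hc [Hgood _]].
  exact (stuck_not_owned Hc Hgood Hn).
Qed.

Lemma unranked_fixOwner c x v q : binds x c -> reachable phi w0 (Pos M v (NF c) q) -> ~ ranked c ->
  fixOwner M phi w0 c pl.
Proof.
  intros Hb Hr nP. pose proof (reachable_occ Hr) as Ho; simpl in Ho.
  unfold ranked, ranked_at in nP. destruct pl; simpl in *.
  - exists v, q; split; auto.
    destruct Hb as [[a ->]|[a ->]]; destruct q.
    + exfalso; apply nP; exists Ver; split; auto; left; simpl; auto.
    + right; split; eauto.
    + left; split; eauto.
    + exfalso; apply nP; exists Ref; split; auto; right; simpl; auto.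
  - intros [v' [q' [Hr' [[Eq [y [a Ec]]]|[Eq [y [a Ec]]]]]]]; subst q';
      pose proof (reachable_occ Hr') as Ho'; simpl in Ho'; apply nP.
    + exists Ver; split; auto; right; rewrite Ec; simpl; auto.
    + exists Ref; split; auto; left; rewrite Ec; simpl; auto.
Qed.

Section Infinite.
Variable f : nat -> position Vr M.
Hypothesis Hrun : infinite_run phi w0 f.
Hypothesis Hfollow : forall i, ownsPos phi (f i) pl -> f (S i) = strategy (f i).
Hypothesis Hclaim0 : claimable (init M phi w0).

Lemma play_claimable_all i : reachable phi w0 (f i) /\ claimable (f i).
Proof.
  apply (@play_claimable f (S i) (proj1 Hrun) Hclaim0);
    [intros; apply (proj2 Hrun) | intros; apply Hfollow; auto | lia].
Qed.

Section RankedOutermost.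
Variables (c psi : form) (Y : Vr) (i0 : nat) (l0 r : list Vr).
Hypothesis Hc_inf : infRegen f c.
Hypothesis Hc_regen : regen f i0 c.
Hypothesis Hc_tail : forall j, S i0 <= j -> Sub (node_form (f j)) c.
Hypothesis Hc_phi : Sub c phi.
Hypothesis Hc_shape : c = FMu Y psi \/ c = FNu Y psi.
Hypothesis HL : L = l0 ++ Y :: r.
Hypothesis Hc_ranked : ranked c.
Local Notation Pre := (l0 ++ [Y]).
Local Notation s j := (least_env (f j)).

Definition at_c j := exists v q, f j = Pos M v (NF c) q.

Lemma at_c_next j v q : f j = Pos M v (NF c) q -> f (S j) = Pos M v (NF psi) q.
Proof.
  intros Ej. pose proof (proj2 Hrun j) as Hm. rewrite Ej in Hm.
  destruct Hc_shape; subst; inversion Hm; auto.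
Qed.

Lemma body_not_at_c j v q : f j = Pos M v (NF psi) q -> ~ at_c j.
Proof.
  intros Ej [v' [q' Ej']]. rewrite Ej in Ej'. inversion Ej'; subst.
  destruct Hc_shape as [E|E]; apply (f_equal (@size Pr Vr)) in E; simpl in E; lia.
Qed.

Lemma at_c_prev j : S i0 <= j -> at_c (S j) ->
  exists v q, f j = Pos M v (NF (FV Y)) q /\ f (S j) = Pos M v (NF c) q.
Proof.
  intros Hj [v [q Ej]].
  pose proof (proj2 Hrun j) as Hm. rewrite Ej in Hm.
  destruct (classic (var_pos (f j))) as [Hv|Hv].
  - revert Hv Hm. destruct (f j) as [v' n q'] eqn:Efj; intros Hv Hm.
    destruct n as [a| |]; simpl in Hv; try contradiction;
      destruct a; simpl in Hv; try contradiction.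
    destruct (var_move_binder Hm) as [c' [Hb [_ E']]].
    assert (c' = c) by congruence; subst c'.
    assert (HbY : binds Y c) by (destruct Hc_shape; [left|right]; eauto).
    rewrite (binds_var Hb HbY). exists v', q'. split; [reflexivity|congruence].
  - exfalso. pose proof (move_size Hm Hv). pose proof (Sub_size (Hc_tail Hj)). lia.
Qed.

Lemma at_c_isolated j : S i0 <= j -> at_c (S j) -> ~ at_c j.
Proof.
  intros Hj HA [v [q Ej]]. destruct (at_c_prev Hj HA) as [v' [q' [Ej' _]]].
  rewrite Ej in Ej'; injection Ej' as _ Ec _; rewrite Ec in Hc_shape.
  destruct Hc_shape; discriminate.
Qed.

Lemma least_env_le_Pre j rho : consistent rho -> claim_ok rho (f j) -> sig_le Pre (s j) rho.
Proof.
  intros Hc Hg. apply (@sig_le_prefix Pre r). rewrite <- app_assoc; simpl; rewrite <- HL.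
  apply (least_env_spec (proj2 (play_claimable_all j))); auto.
Qed.

Lemma sig_step_le j : S i0 <= j -> ~ at_c j -> sig_le Pre (s (S j)) (s j).
Proof.
  intros Hj HnA. destruct (play_claimable_all j) as [Hr HG].
  destruct (claim_step Hr HG (proj2 Hrun j) (Hfollow j)) as [rho [Hc [Hg Hag]]].
  apply sig_le_trans with rho; [apply least_env_le_Pre; auto|].
  right; intros y Hy _; apply Hag.
  intros v c' q x l1 r1 Ej Hb HL1.
  pose proof (Hc_tail Hj) as Hin; rewrite Ej in Hin; simpl in Hin.
  assert (Hne : c' <> c) by (intros ->; apply HnA; exists v, q; auto).
  exact (inner_binder_after Hc_phi Hin Hne Hc_shape Hb HL1 HL y Hy).
Qed.

Lemma sig_regen_lt j : S i0 <= j -> at_c (S j) -> sig_lt Pre (s (S (S j))) (s j).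
Proof.
  intros Hj HA. destruct (at_c_prev Hj HA) as [v [q [Ej Ej1]]].
  destruct (play_claimable_all j) as [_ HG]. rewrite Ej in HG.
  destruct (least_env_spec HG) as [Hc [Hg _]].
  destruct (play_claimable_all (S j)) as [Hr1 _].
  pose proof (reachable_occ Hr1) as Ho. rewrite Ej1 in Ho.
  destruct (ranked_regen_claim v Hc Hc_shape Hc_phi Hc_ranked Ho HL Hg) as [rho [Hc' [Hlt Hg']]].
  rewrite Ej. apply sig_le_lt with rho; auto.
  apply least_env_le_Pre; auto. rewrite (at_c_next Ej1); auto.
Qed.

Lemma sig_tail_le k : S i0 <= k -> ~ at_c k ->
  forall j, k <= j -> ~ at_c j -> sig_le Pre (s j) (s k).
Proof.
  intros Hk HkA j; induction j as [j IH] using lt_wf_ind; intros Hkj HjA.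
  destruct (Nat.eq_dec j k) as [->|Hne]; [right; apply sig_eq_refl|].
  destruct j as [|j']; [lia|].
  destruct (classic (at_c j')) as [HA|HnA].
  - destruct j' as [|j'']; [lia|].
    assert (Hj'' : k <= j'') by (destruct (Nat.eq_dec (S j'') k); [subst; contradiction|lia]).
    left. apply sig_lt_le with (s j''); [apply sig_regen_lt; auto; lia|].
    apply IH; auto. apply at_c_isolated; auto; lia.
  - apply sig_le_trans with (s j'); [apply sig_step_le; auto; lia|]. apply IH; auto; lia.
Qed.

(* Each regeneration of [c] strictly lowers the signature of the positions
   outside [c], which cannot happen infinitely often. *)
Lemma ranked_outermost_absurd : False.
Proof.
  destruct (@sig_least Pre r (fun rho => exists j, S i0 <= j /\ ~ at_c j /\ rho = s j))
    as [m [[k [Hk [HkA ->]]] Hmin]].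
  - rewrite <- app_assoc; exact HL.
  - intros rho [j [_ [_ ->]]]. apply (least_env_spec (proj2 (play_claimable_all j))).
  - destruct (regen_binder Hrun Hc_regen) as [v0 [q0 [x0 [_ [E0 _]]]]].
    exists (s (S (S i0))), (S (S i0)); split; [lia|split; auto].
    eapply body_not_at_c, at_c_next, E0.
  - destruct (Hc_inf k) as [t [Ht Hrt]].
    destruct (regen_binder Hrun Hrt) as [vt [qt [xt [_ [Et1 _]]]]].
    assert (HAt : at_c (S t)) by (exists vt, qt; auto).
    assert (Hlt : sig_lt Pre (s (S (S t))) (s k)).
    { apply sig_lt_le with (s t); [apply sig_regen_lt; auto; lia|].
      apply sig_tail_le; auto. apply at_c_isolated; auto; lia. }
    assert (Hle : sig_le Pre (s k) (s (S (S t)))).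
    { apply Hmin. exists (S (S t)); split; [lia|split; auto].
      eapply body_not_at_c, at_c_next, Et1. }
    eapply sig_lt_irrefl, sig_le_lt; eassumption.
Qed.

End RankedOutermost.

Lemma infinite_play_win : wins_infinite phi w0 pl f.
Proof.
  destruct (outermost_tail Hrun) as [c [i0 [Hout [Hr0 [Hsc Hin]]]]].
  exists c; split; auto.
  destruct (regen_binder Hrun Hr0) as [v [q [Y [_ [E1 [Hb _]]]]]].
  apply (unranked_fixOwner (x := Y) (v := v) (q := q)); auto.
  - rewrite <- E1; apply play_claimable_all.
  - intros P. destruct (binds_shape Hb) as [psi E].
    destruct (in_split _ _ (binds_in_binders Hb Hsc)) as [l0 [r HL]].
    apply (@ranked_outermost_absurd c psi Y i0 l0 r); auto. apply Hout.
Qed.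

End Infinite.

Theorem strategy_winning : claimable (init M phi w0) -> winning_strategy phi w0 pl strategy.
Proof.
  intros Hclaim0. split; [apply strategy_legal|split].
  - intros g n Hrun Hc. apply finite_play_win; auto.
  - intros g Hrun Hc. apply infinite_play_win; auto.
Qed.

End Player.

End Main.

Lemma ownsPos_PII (Pr Vr : Type) (M : CKmodel Pr) (phi : form Pr Vr) (p : position Vr M) :
  ownsPos phi p PII <-> ~ ownsPos phi p PI.
Proof.
  destruct p as [v n q]; unfold ownsPos; simpl.
  destruct (classic (verOwned phi (Pos M v n q))); destruct q;
  assert (Ref <> Ver) by discriminate; assert (Ver <> Ref) by discriminate;
  assert (Ver = Ver) by reflexivity; assert (Ref = Ref) by reflexivity; tauto.
Qed.

Section NotBothWin.
Variables (Pr Vr : Type) (M : CKmodel Pr) (phi : form Pr Vr) (w0 : W M).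
Hypothesis Hmu : mu_formula phi.
Hypothesis Hnd : NoDup (binders phi).
Hypothesis Hsent : sentence phi.
Variables s1 s2 : position Vr M -> position Vr M.
Hypothesis Hw1 : winning_strategy phi w0 PI s1.
Hypothesis Hw2 : winning_strategy phi w0 PII s2.

Lemma reachable_pos_ok p : reachable phi w0 p -> pos_ok phi p.
Proof.
  intros Hr. pose proof (reachable_occ Hmu Hnd Hsent Hr) as H.
  destruct p as [v n q]; destruct n; simpl in *; eapply occ_Sub; eauto.
Qed.

Definition next_pos (p : position Vr M) : position Vr M :=
  if excluded_middle_informative (ownsPos phi p PI) then s1 p else s2 p.

Fixpoint play (n : nat) : position Vr M :=
  match n with 0 => init M phi w0 | S k => next_pos (play k) end.

Lemma play_follows_I i : ownsPos phi (play i) PI -> play (S i) = s1 (play i).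
Proof. intros H; simpl; unfold next_pos; destruct (excluded_middle_informative _); tauto. Qed.

Lemma play_follows_II i : ownsPos phi (play i) PII -> play (S i) = s2 (play i).
Proof.
  intros H; apply ownsPos_PII in H; simpl; unfold next_pos.
  destruct (excluded_middle_informative _); tauto.
Qed.

Lemma next_pos_move p : reachable phi w0 p -> (exists p', move phi p p') -> move phi p (next_pos p).
Proof.
  intros Hr Hex. unfold next_pos. pose proof (reachable_pos_ok Hr) as Hok.
  destruct (excluded_middle_informative _) as [H|H].
  - apply (proj1 Hw1); auto.
  - apply (proj1 Hw2); auto. apply ownsPos_PII; auto.
Qed.

Lemma play_moves n : (forall i, i < n -> exists p', move phi (play i) p') ->
  forall i, i < n -> reachable phi w0 (play i) /\ move phi (play i) (play (S i)).
Proof.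
  intros Hex i; induction i as [|i IH]; intros Hi.
  - assert (Hr : reachable phi w0 (play 0)) by constructor.
    split; auto. apply next_pos_move; auto.
  - destruct IH as [Hr Hm]; [lia|].
    assert (Hr' : reachable phi w0 (play (S i))) by (econstructor; eauto).
    split; auto. apply next_pos_move; auto.
Qed.

Lemma play_run : infinite_run phi w0 play \/ exists n, finite_run phi w0 play n.
Proof.
  destruct (classic (forall i, exists p', move phi (play i) p')) as [Hall|Hnot].
  - left; split; [reflexivity|]. intros i.
    apply (@play_moves (S i)); auto.
  - right. apply not_all_ex_not in Hnot.
    destruct (dec_inh_nat_subset_has_unique_least_element _ (fun n => classic _) Hnot)
      as [n [[Hn Hmin] _]].
    assert (Hlt : forall i, i < n -> exists p', move phi (play i) p')
      by (intros i Hi; apply NNPP; intros H; specialize (Hmin i H); lia).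
    exists n; split; [reflexivity|split].
    + intros i Hi; apply (play_moves Hlt Hi).
    + intros p Hp; apply Hn; eauto.
Qed.

Lemma not_both_win : False.
Proof.
  destruct Hw1 as [_ [F1 I1]], Hw2 as [_ [F2 I2]].
  destruct play_run as [Hinf|[n Hfin]].
  - destruct (I1 play Hinf play_follows_I) as [c1 [[R1 O1] W1]].
    destruct (I2 play Hinf play_follows_II) as [c2 [[R2 O2] W2]].
    assert (c1 = c2) by (apply Sub_antisym; auto).
    subst c2. simpl in W1, W2. contradiction.
  - apply (F2 play n Hfin (fun i _ => play_follows_II i)), ownsPos_PII.
    exact (F1 play n Hfin (fun i _ => play_follows_I i)).
Qed.

End NotBothWin.

Lemma claimable_init (Pr Vr : Type) (M : CKmodel Pr) (phi : form Pr Vr) (w : W M) pl :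
  NoDup (binders phi) -> sentence phi ->
  (match pl with PI => sat M w phi | PII => ~ sat M w phi end) ->
  claimable phi pl (init M phi w).
Proof.
  intros Hnd Hs Hw.
  destruct (consistent_exists M Hnd Hs pl) as [rho Hc]. exists rho; split; auto.
  assert (E : sem rho phi w <-> sat M w phi)
    by (apply sem_ext; intros x Hx; exfalso; apply (Hs x Hx)).
  destruct pl; simpl; rewrite E; auto.
Qed.

Theorem mainTheorem4 (Pr Vr : Type) (M : CKmodel Pr) (w : W M) (phi : form Pr Vr) :
  mu_formula phi -> well_named phi -> sentence phi ->
  (has_winning_strategy M phi w PI <-> sat M w phi) /\
  (has_winning_strategy M phi w PII <-> ~ sat M w phi).
Proof.
  intros Hmu [_ Hnd] Hs.
  assert (WI : sat M w phi -> has_winning_strategy M phi w PI)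
    by (intros H; eexists; apply (strategy_winning Hmu Hnd Hs), claimable_init; auto).
  assert (WII : ~ sat M w phi -> has_winning_strategy M phi w PII)
    by (intros H; eexists; apply (strategy_winning Hmu Hnd Hs), claimable_init; auto).
  split; split; auto.
  - intros [s1 H1]. apply NNPP; intros H2. destruct (WII H2) as [s2 H2'].
    exact (not_both_win Hmu Hnd Hs H1 H2').
  - intros [s2 H2] H1. destruct (WI H1) as [s1 H1'].
    exact (not_both_win Hmu Hnd Hs H1' H2).
Qed.
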